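(* Let $\mathcal{K}$ be an $N$-dimensional asymptotic class (for some positive integer $N$) of finite trees, viewed as $\mathcal{L}_t$-structures, containing arbitrarily large finite members. Let $\mathbb{T}_{\mathbf{C}_\mathcal{K}}$ be the set of complete theories $\mathrm{Th}(\mathcal{M})$ where $\mathcal{M}$ ranges over infinite ultraproducts of members of $\mathcal{K}$. Then (1) $\mathbb{T}_{\mathbf{C}_\mathcal{K}}$ is finite, and (2) every $T\in\mathbb{T}_{\mathbf{C}_\mathcal{K}}$ is $\aleph_0$-categorical.
   Context: Trees: the language $\mathcal{L}_t$ has a binary relation $\le$, a constant $\varepsilon$, a binary function $\sqcap$ and a unary function $\mathtt{pred}$. A tree is an $\mathcal{L}_t$-structure in which $\le$ is a partial order with every downset $\{a:a\le b\}$ well-ordered, $\varepsilon$ is the least element, $a\sqcap a'$ is the greatest common lower bound of $a,a'$, $\mathtt{pred}(a)$ is the greatest element strictly below $a$ for $a\ne\varepsilon$, and $\mathtt{pred}(\varepsilon)=\varepsilon$. Asymptotic classes: for a positive integer $N$, a class $\mathcal{K}$ of finite $\mathcal{L}$-structures is an $N$-dimensional asymptotic class if for every $\mathcal{L}$-formula $\varphi(x,\bar y)$ with $|\bar y|=m$ there is a finite set of triples $(d_i,\mu_i,\theta_i(\bar y))$, $i<k$, with $d_i\in\{0,\frac1N,\dots,1\}$, $\mu_i\in[0,\infty)$ (with $\mu_i>0$ unless $d_i=0$), and $\theta_i$ $\mathcal{L}$-formulas, such that: (i) the $\theta_i$ partition $A^m$ in every $A\in\mathcal{K}$; (ii) for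 each $i$ and $\epsilon>0$ there is $M$ such that for all $A\in\mathcal{K}$ with $|A|\ge M$ and $\bar b\in A^m$ with $A\models\theta_i(\bar b)$, $\big||\varphi(A,\bar b)|-\mu_i|A|^{d_i}\big|\le\epsilon|A|^{d_i}$. *)

From Stdlib Require Import Reals List Arith Lia.
From Stdlib Require Import IndefiniteDescription.
Open Scope R_scope.

Record Lstr : Type := MkLstr {
  car : Type;
  Ble : car -> car -> Prop;
  Beps : car;
  Bmeet : car -> car -> car;
  Bpred : car -> car
}.

(* Terms and formulas, variables as de Bruijn indices. *)
Inductive term : Type :=
  | TVar : nat -> term
  | TEps : term
  | TMeet : term -> term -> term
  | TPred : term -> term.

Inductive formula : Type :=
  | FEq : term -> term -> formula
  | FLe : term -> term -> formula
  | FFalse : formula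
  | FNot : formula -> formula
  | FAnd : formula -> formula -> formula
  | FOr : formula -> formula -> formula
  | FImp : formula -> formula -> formula
  | FEx : formula -> formula
  | FAll : formula -> formula.

Fixpoint teval (M : Lstr) (e : nat -> car M) (t : term) : car M :=
  match t with
  | TVar n => e n
  | TEps => Beps M
  | TMeet t1 t2 => Bmeet M (teval M e t1) (teval M e t2)
  | TPred t1 => Bpred M (teval M e t1)
  end.

Definition scons {A : Type} (x : A) (e : nat -> A) : nat -> A :=
  fun n => match n with 0 => x | S k => e k end.

Fixpoint sat (M : Lstr) (e : nat -> car M) (phi : formula) : Prop :=
  match phi with
  | FEq t1 t2 => teval M e t1 = teval M e t2
  | FLe t1 t2 => Ble M (teval M e t1) (teval M e t2)
  | FFalse => False
  | FNot p => ~ sat M e p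
  | FAnd p q => sat M e p /\ sat M e q
  | FOr p q => sat M e p \/ sat M e q
  | FImp p q => sat M e p -> sat M e q
  | FEx p => exists x : car M, sat M (scons x e) p
  | FAll p => forall x : car M, sat M (scons x e) p
  end.

Fixpoint tbound (n : nat) (t : term) : Prop :=
  match t with
  | TVar k => (k < n)%nat
  | TEps => True
  | TMeet t1 t2 => tbound n t1 /\ tbound n t2
  | TPred t1 => tbound n t1
  end.

Fixpoint fbound (n : nat) (phi : formula) : Prop :=
  match phi with
  | FEq t1 t2 | FLe t1 t2 => tbound n t1 /\ tbound n t2
  | FFalse => True
  | FNot p => fbound n p
  | FAnd p q | FOr p q | FImp p q => fbound n p /\ fbound n q
  | FEx p | FAll p => fbound (S n) p
  end.

Definition sentence (phi : formula) : Prop := fbound 0 phi.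

(* Assignment of a tuple b = (b_0, ..., b_{m-1}) to variables 0..m-1
   (remaining variables get eps; irrelevant for formulas bounded by m). *)
Definition env_of (M : Lstr) (b : list (car M)) : nat -> car M :=
  fun n => nth n b (Beps M).

Definition Blt (M : Lstr) (a b : car M) : Prop := Ble M a b /\ a <> b.

Definition is_tree (M : Lstr) : Prop :=
  (forall a, Ble M a a) /\
  (forall a b, Ble M a b -> Ble M b a -> a = b) /\
  (forall a b c, Ble M a b -> Ble M b c -> Ble M a c) /\
  (* every downset {a : a <= b} is well-ordered: linear, and every
     nonempty subset has a least element *)
  (forall b a a', Ble M a b -> Ble M a' b -> Ble M a a' \/ Ble M a' a) /\
  (forall b (S : car M -> Prop),
      (forall a, S a -> Ble M a b) -> (exists a, S a) ->
      exists a0, S a0 /\ forall a, S a -> Ble M a0 a) /\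
  (forall a, Ble M (Beps M) a) /\
  (forall a a', Ble M (Bmeet M a a') a /\ Ble M (Bmeet M a a') a' /\
     forall c, Ble M c a -> Ble M c a' -> Ble M c (Bmeet M a a')) /\
  (forall a, a <> Beps M ->
     Blt M (Bpred M a) a /\ forall c, Blt M c a -> Ble M c (Bpred M a)) /\
  Bpred M (Beps M) = Beps M.

Definition finite_str (M : Lstr) : Prop :=
  exists l : list (car M), forall x, In x l.

Definition infinite_str (M : Lstr) : Prop := ~ finite_str M.

Definition countably_infinite (M : Lstr) : Prop :=
  exists f : nat -> car M,
    (forall n k, f n = f k -> n = k) /\ (forall x, exists n, f n = x).

Definition card_is (M : Lstr) (P : car M -> Prop) (n : nat) : Prop :=
  exists l : list (car M), NoDup l /\ (forall x, In x l <-> P x) /\ length l = n.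

(* For phi(x, y_1..y_m): x is variable 0, y_j is variable j (1 <= j <= m).
   theta_i(y_1..y_m) uses variables 0..m-1 for y_1..y_m.
   The i-th triple is (d i / N, mu i, theta i), for i < k. *)
Definition asymptotic_class (N : nat) (K : Lstr -> Prop) : Prop :=
  forall (m : nat) (phi : formula), fbound (S m) phi ->
  exists (k : nat) (d : nat -> nat) (mu : nat -> R) (theta : nat -> formula),
    (forall i, (i < k)%nat ->
       (d i <= N)%nat /\ 0 <= mu i /\ (d i <> 0%nat -> 0 < mu i) /\
       fbound m (theta i)) /\
    (forall A, K A -> forall b : list (car A), length b = m ->
       (exists i, (i < k)%nat /\ sat A (env_of A b) (theta i)) /\
       (forall i j, (i < k)%nat -> (j < k)%nat ->
          sat A (env_of A b) (theta i) -> sat A (env_of A b) (theta j) -> i = j)) /\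
    (forall i, (i < k)%nat -> forall eps : R, 0 < eps ->
       exists M : nat, forall A (nA nphi : nat) (b : list (car A)),
         K A -> card_is A (fun _ => True) nA -> (M <= nA)%nat ->
         length b = m -> sat A (env_of A b) (theta i) ->
         card_is A (fun x => sat A (env_of A (x :: b)) phi) nphi ->
         Rabs (INR nphi - mu i * Rpower (INR nA) (INR (d i) / INR N))
           <= eps * Rpower (INR nA) (INR (d i) / INR N)).

Definition ultrafilter {I : Type} (U : (I -> Prop) -> Prop) : Prop :=
  U (fun _ => True) /\
  ~ U (fun _ => False) /\
  (forall A B : I -> Prop, U A -> (forall i, A i -> B i) -> U B) /\
  (forall A B : I -> Prop, U A -> U B -> U (fun i => A i /\ B i)) /\
  (forall A : I -> Prop, U A \/ U (fun i => ~ A i)).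

Definition uprod {I : Type} (F : I -> Lstr) : Type := forall i, car (F i).

Definition ucls {I : Type} (U : (I -> Prop) -> Prop) (F : I -> Lstr)
  (f : uprod F) : uprod F -> Prop := fun g => U (fun i => f i = g i).

Definition ucar {I : Type} (U : (I -> Prop) -> Prop) (F : I -> Lstr) : Type :=
  { P : uprod F -> Prop | exists f, P = ucls U F f }.

Definition umk {I : Type} (U : (I -> Prop) -> Prop) (F : I -> Lstr)
  (f : uprod F) : ucar U F := exist _ (ucls U F f) (ex_intro _ f eq_refl).

Definition urep {I : Type} (U : (I -> Prop) -> Prop) (F : I -> Lstr)
  (P : ucar U F) : uprod F :=
  proj1_sig (constructive_indefinite_description _ (proj2_sig P)).

Definition ultraproduct {I : Type} (U : (I -> Prop) -> Prop) (F : I -> Lstr)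
  : Lstr :=
  {| car := ucar U F;
     Ble := fun P Q => U (fun i => Ble (F i) (urep U F P i) (urep U F Q i));
     Beps := umk U F (fun i => Beps (F i));
     Bmeet := fun P Q => umk U F (fun i => Bmeet (F i) (urep U F P i) (urep U F Q i));
     Bpred := fun P => umk U F (fun i => Bpred (F i) (urep U F P i)) |}.

Definition Th (M : Lstr) : formula -> Prop :=
  fun s => sentence s /\ sat M (fun _ => Beps M) s.

Definition models (M : Lstr) (T : formula -> Prop) : Prop :=
  forall s, T s -> sat M (fun _ => Beps M) s.

Definition isomorphic (M1 M2 : Lstr) : Prop :=
  exists h : car M1 -> car M2,
    (forall x y, h x = h y -> x = y) /\ (forall z, exists x, h x = z) /\
    (forall x y, Ble M1 x y <-> Ble M2 (h x) (h y)) /\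
    h (Beps M1) = Beps M2 /\
    (forall x y, h (Bmeet M1 x y) = Bmeet M2 (h x) (h y)) /\
    (forall x, h (Bpred M1 x) = Bpred M2 (h x)).

Definition aleph0_categorical (T : formula -> Prop) : Prop :=
  forall M1 M2 : Lstr, countably_infinite M1 -> countably_infinite M2 ->
    models M1 T -> models M2 T -> isomorphic M1 M2.

(* Applying the asymptotic estimate to x <= y, the size of
     a downset of a large member of K is either bounded or lies in one of the
     finitely many windows [L, 2L] with L ~ mu n^(d/N).  A downset of size h
     contains downsets of every size 1..h, and finitely many windows cannot
     cover such a long range; so all trees of K have height <= some Hd.
   - A finite list of cells.  For a formula tau(x), the asymptotic estimate
     for "x is a tau-child of y" splits the parents y into finitely many
     pieces, on each of which the number of tau-children is eventually either
     a fixed integer or unbounded.  Refining iteratively produces partitions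
     [cells j] of the universe into finitely many cells; the sentences saying
     that the cells partition the universe and have the prescribed numbers of
     children, together with basic tree axioms, form a set Ax which holds in
     all large members of K, hence (Los) in every infinite ultraproduct.
   - Back and forth.  In two models of Ax, finite partial maps preserving
     pred, equality and the cells of the appropriate level can always be
     extended.  Hence models of Ax whose roots lie in the same cell are
     elementarily equivalent (finitely many theories, one per root cell) and
     countable ones are isomorphic (aleph_0-categoricity). *)

From Stdlib Require Import Reals List Arith Lia Lra Classical ClassicalEpsilon
  FunctionalExtensionality PropExtensionality ProofIrrelevance.
Import ListNotations.
Local Open Scope nat_scope.

Definition upren (r : nat -> nat) : nat -> nat :=
  fun n => match n with 0 => 0 | S k => S (r k) end.

Fixpoint trename (r : nat -> nat) (t : term) : term :=
  match t with
  | TVar n => TVar (r n)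
  | TEps => TEps
  | TMeet a b => TMeet (trename r a) (trename r b)
  | TPred a => TPred (trename r a)
  end.

Fixpoint frename (r : nat -> nat) (p : formula) : formula :=
  match p with
  | FEq a b => FEq (trename r a) (trename r b)
  | FLe a b => FLe (trename r a) (trename r b)
  | FFalse => FFalse
  | FNot q => FNot (frename r q)
  | FAnd q1 q2 => FAnd (frename r q1) (frename r q2)
  | FOr q1 q2 => FOr (frename r q1) (frename r q2)
  | FImp q1 q2 => FImp (frename r q1) (frename r q2)
  | FEx q => FEx (frename (upren r) q)
  | FAll q => FAll (frename (upren r) q)
  end.

Lemma teval_rename M e r t : teval M e (trename r t) = teval M (fun n => e (r n)) t.
Proof. induction t; simpl; congruence. Qed.

Lemma scons_upren {A} (x : A) (e : nat -> A) r :
  (fun n => scons x e (upren r n)) = scons x (fun n => e (r n)).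
Proof. apply functional_extensionality; intros [|n]; reflexivity. Qed.

Lemma sat_rename M p : forall r e, sat M e (frename r p) <-> sat M (fun n => e (r n)) p.
Proof.
  induction p; intros r e; simpl; rewrite ?teval_rename, ?IHp, ?IHp1, ?IHp2; try tauto.
  - split; intros [x Hx]; exists x; [rewrite IHp, scons_upren in Hx | rewrite IHp, scons_upren];
      exact Hx.
  - split; intros Hx x; specialize (Hx x); [rewrite IHp, scons_upren in Hx | rewrite IHp, scons_upren];
      exact Hx.
Qed.

Lemma tbound_rename t n n' r : tbound n t -> (forall m, m < n -> r m < n') ->
  tbound n' (trename r t).
Proof. induction t; simpl; intuition. Qed.

Lemma fbound_rename p : forall n n' r, fbound n p -> (forall m, m < n -> r m < n') ->
  fbound n' (frename r p).
Proof.
  induction p; simpl; intros n n' r Hb Hr; intuition eauto using tbound_rename;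
    apply (IHp (S n)); auto; intros [|m] Hm; simpl; try lia; specialize (Hr m); lia.
Qed.

Fixpoint predn (n : nat) (t : term) : term :=
  match n with 0 => t | S n => TPred (predn n t) end.

Fixpoint piter (M : Lstr) (n : nat) (x : car M) : car M :=
  match n with 0 => x | S n => Bpred M (piter M n x) end.

Lemma teval_predn M e n t : teval M e (predn n t) = piter M n (teval M e t).
Proof. induction n; simpl; congruence. Qed.

Lemma tbound_predn n t k : tbound k t -> tbound k (predn n t).
Proof. induction n; simpl; auto. Qed.

Lemma piter_S_r M n x : piter M (S n) x = piter M n (Bpred M x).
Proof. induction n; simpl in *; congruence. Qed.

Lemma piter_add M n m x : piter M (n + m) x = piter M n (piter M m x).
Proof. induction n; simpl; congruence. Qed.

Fixpoint exists_block (k : nat) (p : formula) : formula :=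
  match k with 0 => p | S k => exists_block k (FEx p) end.

Fixpoint app_env {A} (l : list A) (e : nat -> A) : nat -> A :=
  match l with [] => e | x :: l => scons x (app_env l e) end.

Lemma sat_exists_block M k : forall p e, sat M e (exists_block k p) <->
  exists l, length l = k /\ sat M (app_env l e) p.
Proof.
  induction k; intros p e; simpl.
  - split; [intros H; exists []; auto | intros [[|x l] [Hl H]]; [exact H | discriminate]].
  - rewrite IHk. split.
    + intros [l [Hl [x Hx]]]. exists (x :: l). simpl; split; auto.
    + intros [[|x l] [Hl H]]; [discriminate |].
      exists l; split; [simpl in Hl; lia |]. exists x; exact H.
Qed.

Lemma fbound_exists_block k : forall p n, fbound (n + k) p -> fbound n (exists_block k p).
Proof.
  induction k; intros p n H; simpl.
  - rewrite Nat.add_0_r in H; auto.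
  - apply IHk. simpl. replace (S (n + k)) with (n + S k) by lia. auto.
Qed.

Lemma app_env_skip {A} (l : list A) e n : app_env l e (length l + n) = e n.
Proof. induction l; simpl; auto. Qed.

Lemma app_env_nth {A} (l : list A) e d i : i < length l -> app_env l e i = nth i l d.
Proof.
  revert i; induction l; simpl; intros i Hi; [lia |].
  destruct i; simpl; auto. apply IHl; lia.
Qed.

Fixpoint among (k : nat) : formula :=
  match k with 0 => FFalse | S k => FOr (among k) (FEq (TVar 0) (TVar (S k))) end.

Lemma fbound_among k n : k < n -> fbound n (among k).
Proof. induction k; simpl; intros; auto. split; [apply IHk; lia | split; simpl; lia]. Qed.

Lemma sat_among M z l e : forall k, k <= length l ->
  (sat M (scons z (app_env l e)) (among k) <-> exists i, i < k /\ z = nth i l z).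
Proof.
  induction k; intros Hk; simpl.
  - split; [tauto |]. intros [i [Hi _]]; lia.
  - rewrite IHk by lia. rewrite (app_env_nth l e z k) by lia. split.
    + intros [[i [Hi Hz]] | Hz]; [exists i | exists k]; split; auto.
    + intros [i [Hi Hz]]. destruct (Nat.eq_dec i k); [subst; right; auto |].
      left; exists i; split; auto; lia.
Qed.

(* Renaming that moves the parameters of p past k fresh variables. *)
Definition skip_after (k : nat) : nat -> nat :=
  fun n => match n with 0 => 0 | S m => S (k + m) end.

Definition at_most (k : nat) (p : formula) : formula :=
  exists_block k (FAll (FImp (frename (skip_after k) p) (among k))).

Lemma sat_at_most M k p e : sat M e (at_most k p) <->
  exists l, length l = k /\ forall z, sat M (scons z e) p -> In z l.
Proof.
  unfold at_most. rewrite sat_exists_block.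
  assert (E : forall (l : list (car M)) z, length l = k ->
            (fun n => scons z (app_env l e) (skip_after k n)) = scons z e).
  { intros l z Hl. apply functional_extensionality; intros [|n]; simpl; auto.
    subst k. apply app_env_skip. }
  split; intros [l [Hl H]]; exists l; split; auto; simpl in *.
  - intros z Hz. specialize (H z). rewrite sat_rename, (E l z Hl) in H.
    apply H, sat_among in Hz; [| lia]. destruct Hz as [i [Hi ->]]. apply nth_In; lia.
  - intros z Hz. rewrite sat_rename, (E l z Hl) in Hz. apply sat_among; [lia |].
    destruct (In_nth l z z (H z Hz)) as [i [Hi Hz']]. exists i; split; [lia | auto].
Qed.

Lemma fbound_at_most k p n : fbound (S n) p -> fbound n (at_most k p).
Proof.
  intros H. apply fbound_exists_block. simpl. split.
  - apply (fbound_rename p (S n)); auto. intros [|m] Hm; simpl; lia.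
  - apply fbound_among; lia.
Qed.

Definition exactly (n : nat) (p : formula) : formula :=
  match n with 0 => at_most 0 p | S m => FAnd (at_most (S m) p) (FNot (at_most m p)) end.

Lemma fbound_exactly n p k : fbound (S k) p -> fbound k (exactly n p).
Proof. destruct n; intros; [apply fbound_at_most; auto |]. split; apply fbound_at_most; auto. Qed.

Definition FTrue : formula := FEq (TVar 0) (TVar 0).

Fixpoint big_or (l : list formula) : formula :=
  match l with [] => FFalse | s :: l => FOr s (big_or l) end.

Lemma sat_big_or A e l : sat A e (big_or l) <-> exists s, In s l /\ sat A e s.
Proof.
  induction l; simpl; [split; [tauto | intros [s [[] _]]] |].
  rewrite IHl. split.
  - intros [H | [s [Hs H]]]; [exists a | exists s]; auto.
  - intros [s [[E | Hs] H]]; [subst; left; auto | right; exists s; auto].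
Qed.

Lemma fbound_big_or l n : (forall s, In s l -> fbound n s) -> fbound n (big_or l).
Proof. induction l; simpl; auto. Qed.

(** * Ultrafilters and Los's theorem *)

Section Ultraproduct.
Variables (I : Type) (U : (I -> Prop) -> Prop).
Hypothesis hU : ultrafilter U.

Lemma U_mono (A B : I -> Prop) : U A -> (forall i, A i -> B i) -> U B.
Proof. apply hU. Qed.

Lemma U_and (A B : I -> Prop) : U A -> U B -> U (fun i => A i /\ B i).
Proof. apply hU. Qed.

Lemma U_all (A : I -> Prop) : (forall i, A i) -> U A.
Proof. intros H. apply (U_mono _ _ (proj1 hU)). auto. Qed.

Lemma U_not_false : ~ U (fun _ => False).
Proof. apply hU. Qed.

Lemma U_not (A : I -> Prop) : U (fun i => ~ A i) <-> ~ U A.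
Proof.
  split.
  - intros H1 H2. apply U_not_false. apply (U_mono _ _ (U_and _ _ H1 H2)). tauto.
  - intros H. destruct (proj2 (proj2 (proj2 (proj2 hU))) A); tauto.
Qed.

Lemma U_or (A B : I -> Prop) : U (fun i => A i \/ B i) <-> U A \/ U B.
Proof.
  split.
  - intros H. destruct (classic (U A)) as [HA | HA]; [left; auto | right].
    apply U_not in HA. apply (U_mono _ _ (U_and _ _ H HA)). tauto.
  - intros [H | H]; apply (U_mono _ _ H); tauto.
Qed.

Lemma U_imp (A B : I -> Prop) : U (fun i => A i -> B i) <-> (U A -> U B).
Proof.
  transitivity (U (fun i => ~ A i \/ B i)).
  - split; intros H; apply (U_mono _ _ H); intros i; tauto.
  - rewrite U_or, U_not. tauto.
Qed.

Variable F : I -> Lstr.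

Definition pick (i : I) (Q : car (F i) -> Prop) : car (F i) :=
  match excluded_middle_informative (exists x, Q x) with
  | left H => proj1_sig (constructive_indefinite_description _ H)
  | right _ => Beps (F i)
  end.

Lemma pick_spec i Q : (exists x, Q x) -> Q (pick i Q).
Proof.
  intros H. unfold pick. destruct excluded_middle_informative; [| tauto].
  destruct constructive_indefinite_description; auto.
Qed.

Lemma U_exists (Q : forall i, car (F i) -> Prop) :
  (exists h : uprod F, U (fun i => Q i (h i))) <-> U (fun i => exists x, Q i x).
Proof.
  split.
  - intros [h Hh]. apply (U_mono _ _ Hh). eauto.
  - intros H. exists (fun i => pick i (Q i)). apply (U_mono _ _ H). intros i. apply pick_spec.
Qed.

Lemma U_forall (Q : forall i, car (F i) -> Prop) :
  (forall h : uprod F, U (fun i => Q i (h i))) <-> U (fun i => forall x, Q i x).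
Proof.
  split.
  - intros H. apply NNPP. intros H1. apply U_not in H1.
    apply U_not_false. apply (U_mono _ _ (U_and _ _ (H (fun i => pick i (fun x => ~ Q i x))) H1)).
    intros i [H2 H3]. apply not_all_ex_not in H3. exact (pick_spec i _ H3 H2).
  - intros H h. apply (U_mono _ _ H). auto.
Qed.

Notation M := (ultraproduct U F).

Lemma urep_spec (P : ucar U F) : proj1_sig P = ucls U F (urep U F P).
Proof. unfold urep. destruct IndefiniteDescription.constructive_indefinite_description as [f Hf]. exact Hf. Qed.

Lemma urep_umk (a : uprod F) : U (fun i => urep U F (umk U F a) i = a i).
Proof.
  pose proof (urep_spec (umk U F a)) as H. simpl in H.
  assert (H1 : ucls U F (urep U F (umk U F a)) (urep U F (umk U F a))) by (apply U_all; auto).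
  rewrite <- H in H1. apply (U_mono _ _ H1). auto.
Qed.

Lemma umk_eq (a b : uprod F) : umk U F a = umk U F b <-> U (fun i => a i = b i).
Proof.
  split.
  - intros H. apply (f_equal (@proj1_sig _ _)) in H. simpl in H.
    assert (H1 : ucls U F b b) by (apply U_all; auto).
    rewrite <- H in H1. exact H1.
  - intros H. unfold umk. apply subset_eq_compat. apply functional_extensionality; intros h.
    apply propositional_extensionality. unfold ucls.
    split; intros H2; apply (U_mono _ _ (U_and _ _ H H2)); intros i [E1 E2]; congruence.
Qed.

Lemma umk_urep (P : ucar U F) : umk U F (urep U F P) = P.
Proof.
  pose proof (urep_spec P) as H. destruct P as [P0 HP]. unfold umk. apply subset_eq_compat. simpl in H. auto.
Qed.

Lemma teval_ultraproduct (g : nat -> uprod F) t :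
  teval M (fun n => umk U F (g n)) t = umk U F (fun i => teval (F i) (fun n => g n i) t).
Proof.
  induction t; simpl; auto.
  - rewrite IHt1, IHt2. apply umk_eq.
    apply (U_mono _ _ (U_and _ _ (urep_umk (fun i => teval (F i) (fun n => g n i) t1))
                                 (urep_umk (fun i => teval (F i) (fun n => g n i) t2)))).
    intros i [E1 E2]. simpl. rewrite E1, E2. reflexivity.
  - rewrite IHt. apply umk_eq.
    apply (U_mono _ _ (urep_umk (fun i => teval (F i) (fun n => g n i) t))).
    intros i E1. simpl. rewrite E1; auto.
Qed.

Lemma env_cons (h : uprod F) (g : nat -> uprod F) :
  scons (umk U F h) (fun n => umk U F (g n)) = fun n => umk U F (scons h g n).
Proof. apply functional_extensionality; intros [|n]; reflexivity. Qed.

Lemma env_cons_at (h : uprod F) (g : nat -> uprod F) i :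
  (fun n => scons h g n i) = scons (h i) (fun n => g n i).
Proof. apply functional_extensionality; intros [|n]; reflexivity. Qed.

Theorem los p : forall g : nat -> uprod F,
  sat M (fun n => umk U F (g n)) p <-> U (fun i => sat (F i) (fun n => g n i) p).
Proof.
  induction p; intros g; simpl.
  - rewrite !teval_ultraproduct. apply umk_eq.
  - rewrite !teval_ultraproduct.
    pose proof (U_and _ _ (urep_umk (fun i => teval (F i) (fun n => g n i) t))
                          (urep_umk (fun i => teval (F i) (fun n => g n i) t0))) as Hrep.
    split; intros H; apply (U_mono _ _ (U_and _ _ H Hrep));
      intros i [H1 [E1 E2]]; simpl in *; [rewrite <- E1, <- E2 | rewrite E1, E2]; auto.
  - split; [tauto | apply U_not_false].
  - rewrite IHp, U_not. tauto.
  - rewrite IHp1, IHp2. split.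
    + intros [H1 H2]. apply U_and; auto.
    + intros H; split; apply (U_mono _ _ H); tauto.
  - rewrite IHp1, IHp2, U_or. tauto.
  - rewrite IHp1, IHp2, U_imp. tauto.
  - rewrite <- (U_exists (fun i x => sat (F i) (scons x (fun n => g n i)) p)). split.
    + intros [X HX]. rewrite <- (umk_urep X), env_cons, IHp in HX. exists (urep U F X).
      apply (U_mono _ _ HX). intros i. rewrite env_cons_at. auto.
    + intros [h Hh]. exists (umk U F h). rewrite env_cons, IHp.
      apply (U_mono _ _ Hh). intros i. rewrite env_cons_at. auto.
  - rewrite <- (U_forall (fun i x => sat (F i) (scons x (fun n => g n i)) p)). split.
    + intros H h. specialize (H (umk U F h)). rewrite env_cons, IHp in H.
      apply (U_mono _ _ H). intros i. rewrite env_cons_at. auto.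
    + intros H X. rewrite <- (umk_urep X), env_cons, IHp.
      apply (U_mono _ _ (H (urep U F X))). intros i. rewrite env_cons_at. auto.
Qed.

End Ultraproduct.

Definition edec {A : Type} : forall x y : A, {x = y} + {x <> y} :=
  fun x y => excluded_middle_informative (x = y).

Definition covered (A : Lstr) (P : car A -> Prop) (k : nat) : Prop :=
  exists l : list (car A), length l = k /\ forall z, P z -> In z l.

Lemma covered_pad A P k k' : (exists l : list (car A), length l <= k /\ forall z, P z -> In z l) ->
  k <= k' -> covered A P k'.
Proof.
  intros [l [Hl H]] Hk. exists (l ++ repeat (Beps A) (k' - length l)). split.
  - rewrite length_app, repeat_length. lia.
  - intros z Hz. apply in_or_app. left; auto.
Qed.

Lemma card_exists (A : Lstr) (P : car A -> Prop) : finite_str A -> exists n, card_is A P n.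
Proof.
  intros [l Hl].
  set (dP := fun x => if excluded_middle_informative (P x) then true else false).
  exists (length (nodup edec (filter dP l))), (nodup edec (filter dP l)).
  split; [apply NoDup_nodup | split; auto].
  intros x. rewrite nodup_In, filter_In. unfold dP.
  destruct excluded_middle_informative; intuition; discriminate.
Qed.

Lemma card_unique A P n m : card_is A P n -> card_is A P m -> n = m.
Proof.
  intros [l1 [N1 [H1 L1]]] [l2 [N2 [H2 L2]]]. subst.
  apply Nat.le_antisymm; apply NoDup_incl_length; auto; intros x Hx.
  - apply H2, H1, Hx.
  - apply H1, H2, Hx.
Qed.

Lemma card_covered A P n k : card_is A P n -> (covered A P k <-> n <= k).
Proof.
  intros [l1 [N1 [H1 L1]]]. split.
  - intros [l [Hl H]]. subst. apply NoDup_incl_length; auto. intros x Hx. apply H, H1, Hx.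
  - intros Hk. apply (covered_pad A P n k); auto. exists l1; split; [lia |].
    intros z Hz; apply H1; auto.
Qed.

Lemma card_ext A P Q n : (forall x, P x <-> Q x) -> card_is A P n -> card_is A Q n.
Proof. intros E [l [N [H L]]]. exists l; split; auto; split; auto. intros x; rewrite H; auto. Qed.

Lemma card_le_total A P n nA : card_is A P n -> card_is A (fun _ => True) nA -> n <= nA.
Proof.
  intros [l1 [N1 [H1 L1]]] [l2 [N2 [H2 L2]]]. subst. apply NoDup_incl_length; auto.
  intros x _. apply H2; auto.
Qed.

Lemma nat_least (P : nat -> Prop) : (exists n, P n) -> exists n, P n /\ forall m, P m -> n <= m.
Proof.
  intros [n Hn]. induction n as [n IH] using lt_wf_ind.
  destruct (classic (exists m, m < n /\ P m)) as [[m [Hm Pm]] | Hno]; [exact (IH m Hm Pm) |].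
  exists n; split; auto. intros m Pm. destruct (le_lt_dec n m); auto.
  exfalso; apply Hno; eauto.
Qed.

Section FiniteTree.
Variable A : Lstr.
Hypothesis hT : is_tree A.
Hypothesis hF : finite_str A.
Notation le := (Ble A).
Notation eps := (Beps A).
Notation pr := (Bpred A).

Lemma t_refl x : le x x. Proof. apply hT. Qed.
Lemma t_anti x y : le x y -> le y x -> x = y. Proof. apply hT. Qed.
Lemma t_trans x y z : le x y -> le y z -> le x z. Proof. apply hT. Qed.
Lemma t_eps_least x : le eps x. Proof. apply hT. Qed.
Lemma t_meet x y : le (Bmeet A x y) x /\ le (Bmeet A x y) y /\
  forall c, le c x -> le c y -> le c (Bmeet A x y).
Proof. apply hT. Qed.
Lemma t_pred x : x <> eps -> Blt A (pr x) x /\ forall c, Blt A c x -> le c (pr x).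
Proof. apply hT. Qed.
Lemma t_pred_eps : pr eps = eps. Proof. apply hT. Qed.

Lemma pred_le x : le (pr x) x.
Proof.
  destruct (edec x eps) as [-> | E]; [rewrite t_pred_eps; apply t_refl | apply (t_pred x E)].
Qed.

Lemma below_split y : y <> eps -> forall x, le x y <-> (x = y \/ le x (pr y)).
Proof.
  intros Hy x. split.
  - intros H. destruct (edec x y); [left; auto | right]. apply (t_pred y Hy); split; auto.
  - intros [-> | H]; [apply t_refl | apply (t_trans _ _ _ H (pred_le y))].
Qed.

Lemma not_le_pred y : y <> eps -> ~ le y (pr y).
Proof. intros Hy H. destruct (t_pred y Hy) as [[H1 H2] _]. apply H2, t_anti; auto. Qed.

Lemma downset_pred y n : y <> eps -> card_is A (fun x => le x y) n ->
  card_is A (fun x => le x (pr y)) (n - 1).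
Proof.
  intros Hy Hc. destruct (card_exists A (fun x => le x (pr y)) hF) as [m Hm].
  assert (Hc2 : card_is A (fun x => le x y) (S m)).
  { destruct Hm as [l [N [H L]]]. exists (y :: l). split; [| split].
    - constructor; auto. rewrite H. apply not_le_pred; auto.
    - intros x. rewrite (below_split y Hy x). simpl. rewrite H. intuition.
    - simpl; congruence. }
  rewrite (card_unique _ _ _ _ Hc Hc2). replace (S m - 1) with m by lia. auto.
Qed.

Lemma downset_pos y n : card_is A (fun x => le x y) n -> 1 <= n.
Proof. intros [[|x l] [_ [H L]]]; simpl in L; [| lia]. exfalso. apply (H y), t_refl. Qed.

Lemma downset_one y : card_is A (fun x => le x y) 1 -> y = eps.
Proof.
  intros Hc. destruct (edec y eps) as [E | E]; auto. exfalso.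
  destruct (downset_pred y 1 E Hc) as [[|] [_ [H L]]]; [| discriminate].
  apply (H (pr y)), t_refl.
Qed.

Lemma downset_eps : card_is A (fun x => le x eps) 1.
Proof.
  exists [eps]. split; [repeat constructor; simpl; tauto | split; auto].
  intros x; simpl. split; [intros [-> | []]; apply t_refl |].
  intros H; left; apply t_anti; auto; apply t_eps_least.
Qed.

Lemma downset_piter y n : card_is A (fun x => le x y) n ->
  forall j, j < n -> card_is A (fun x => le x (piter A j y)) (n - j).
Proof.
  intros Hc j. induction j; intros Hj.
  - simpl. replace (n - 0) with n by lia. auto.
  - assert (IH := IHj ltac:(lia)). simpl.
    destruct (edec (piter A j y) eps) as [E | E].
    + rewrite E in IH. pose proof (card_unique _ _ _ _ IH downset_eps). lia.
    + replace (n - S j) with (n - j - 1) by lia. apply downset_pred; auto.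
Qed.

Lemma piter_eps j : piter A j eps = eps.
Proof. induction j; simpl; auto. rewrite IHj. apply t_pred_eps. Qed.

Lemma piter_top y n : card_is A (fun x => le x y) n -> piter A (n - 1) y = eps.
Proof.
  intros Hc. pose proof (downset_pos _ _ Hc). apply downset_one.
  assert (H1 := downset_piter y n Hc (n - 1) ltac:(lia)).
  replace (n - (n - 1)) with 1 in H1 by lia. exact H1.
Qed.

Lemma piter_le j y : le (piter A j y) y.
Proof. induction j; simpl; [apply t_refl | apply (t_trans _ _ _ (pred_le _) IHj)]. Qed.

Lemma below_ancestors n : forall y, card_is A (fun x => le x y) n ->
  forall x, le x y -> exists j, j < n /\ x = piter A j y.
Proof.
  induction n; intros y Hc x Hx; [pose proof (downset_pos _ _ Hc); lia |].
  destruct (edec y eps) as [-> | E].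
  - exists 0. split; [lia |]. simpl. apply t_anti; auto. apply t_eps_least.
  - apply (below_split y E x) in Hx. destruct Hx as [Hx | Hx]; [exists 0; split; [lia | auto] |].
    pose proof (downset_pred _ _ E Hc) as H2. replace (S n - 1) with n in H2 by lia.
    destruct (IHn _ H2 x Hx) as [j [Hj Ex]]. exists (S j). split; [lia |].
    rewrite piter_S_r. auto.
Qed.

End FiniteTree.

Lemma nat_above (x : R) : exists n : nat, (x <= INR n)%R.
Proof.
  destruct (Rle_or_lt x 0) as [H | H]; [exists 0; simpl; lra |].
  destruct (archimed x) as [H1 _]. exists (Z.to_nat (Rdefinitions.up x)).
  rewrite INR_IZR_INZ, ZifyInst.of_nat_to_nat_eq.
  apply (Rle_trans _ (IZR (Rdefinitions.up x))); [lra |]. apply IZR_le. lia.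
Qed.

Lemma Rabs_le_between x b : (Rabs x <= b -> - b <= x <= b)%R.
Proof. intros H. pose proof (Rle_abs x). pose proof (Rle_abs (- x)). rewrite Rabs_Ropp in *. lra. Qed.

Lemma Rpower_0 x : Rpower x 0 = 1%R.
Proof. unfold Rpower. rewrite Rmult_0_l. apply exp_0. Qed.

Lemma Rpower_pos x y : (0 < Rpower x y)%R.
Proof. apply exp_pos. Qed.

Lemma Rpower_unbounded (a : R) : (0 < a)%R -> forall B : R, exists M : nat,
  forall n : nat, M <= n -> (B <= Rpower (INR n) a)%R.
Proof.
  intros Ha B. destruct (nat_above (exp (B / a))) as [M HM]. exists (S M). intros n Hn.
  assert (Hpos : (0 < INR n)%R) by (apply lt_0_INR; lia).
  assert (HnM : (exp (B / a) <= INR n)%R) by (apply (Rle_trans _ _ _ HM), le_INR; lia).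
  assert (Hln : (B / a <= ln (INR n))%R).
  { rewrite <- (ln_exp (B / a)).
    destruct (Rle_lt_or_eq_dec _ _ HnM) as [Hlt | <-]; [left; apply ln_increasing | right];
      auto using exp_pos. }
  assert (B <= a * ln (INR n))%R.
  { replace B with (a * (B / a))%R by (field; lra). apply Rmult_le_compat_l; lra. }
  pose proof (exp_ineq1_le (a * ln (INR n))). unfold Rpower. lra.
Qed.

Lemma INR_close (a b : nat) : (Rabs (INR a - INR b) < 1)%R -> a = b.
Proof.
  intros H. apply Rabs_def2 in H. destruct H as [H1 H2].
  destruct (lt_eq_lt_dec a b) as [[Hl | He] | Hl]; auto; exfalso;
    apply le_INR in Hl; rewrite S_INR in Hl; lra.
Qed.

Lemma common_threshold (Q : nat -> nat -> Prop) k :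
  (forall i, i < k -> exists M, Q i M) -> (forall i M M', Q i M -> M <= M' -> Q i M') ->
  exists M, forall i, i < k -> Q i M.
Proof.
  intros H Hm. induction k.
  - exists 0; intros; lia.
  - destruct IHk as [M1 H1]; [intros; apply H; lia |].
    destruct (H k ltac:(lia)) as [M2 H2]. exists (Nat.max M1 M2). intros i Hi.
    destruct (Nat.eq_dec i k) as [-> | ]; [apply (Hm _ M2); auto; lia |].
    apply (Hm _ M1); [apply H1; lia | lia].
Qed.

Lemma window_cover (C : nat) : forall n (ws : list R), length ws = n -> forall V : nat,
  (forall v : nat, C < v <= V -> exists L, In L ws /\ (L <= INR v <= 2 * L)%R) ->
  V + 2 <= (C + 2) * 2 ^ n.
Proof.
  induction n as [n IHn] using lt_wf_ind. intros ws Hn V HV.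
  destruct (le_lt_dec V C) as [HVC | HVC].
  { assert (1 <= 2 ^ n) by (apply Nat.neq_0_lt_0, Nat.pow_nonzero; lia). nia. }
  destruct (HV V ltac:(lia)) as [L [HL [HL1 HL2]]].
  (* the window of V covers all of [n0, V] where n0 is the least integer >= L *)
  destruct (nat_least (fun m => (L <= INR m)%R)) as [n0 [Hn0 Hmin]]; [exists V; auto |].
  assert (n0pos : 1 <= n0).
  { destruct n0; [simpl in Hn0 | lia]. assert (1 <= INR V)%R by (apply (le_INR 1); lia). lra. }
  assert (HV' : (INR (n0 - 1) < L)%R).
  { destruct (Rlt_or_le (INR (n0 - 1)) L) as [H | H]; auto. apply Hmin in H. lia. }
  set (ws' := remove Req_dec_T L ws).
  assert (Hlen : length ws' < n) by (subst; apply remove_length_lt; auto).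
  assert (IH := IHn (length ws') Hlen ws' eq_refl (n0 - 1)).
  assert (Hcov : forall v : nat, C < v <= n0 - 1 ->
                   exists L', In L' ws' /\ (L' <= INR v <= 2 * L')%R).
  { intros v Hv. assert (Hv' : (INR v <= INR (n0 - 1))%R) by (apply le_INR; lia).
    assert (Hvle : v <= V) by (apply INR_le; lra).
    destruct (HV v ltac:(lia)) as [L' [HL' HL'2]]. exists L'. split; auto.
    apply in_in_remove; auto. intros ->. lra. }
  specialize (IH Hcov).
  assert (HVn0 : V <= 2 * n0) by (apply INR_le; rewrite mult_INR; simpl; lra).
  assert (2 ^ length ws' * 2 <= 2 ^ n).
  { replace (2 ^ length ws' * 2) with (2 ^ S (length ws')) by (simpl; lia).
    apply Nat.pow_le_mono_r; lia. }
  nia.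
Qed.

Section AsymptoticTrees.
Variables (N : nat) (K : Lstr -> Prop).
Hypothesis hN : 0 < N.
Hypothesis hK : forall A, K A -> finite_str A /\ is_tree A.
Hypothesis hAC : asymptotic_class N K.

Definition e0 (A : Lstr) : nat -> car A := fun _ => Beps A.
Definition sat1 (A : Lstr) (p : formula) (y : car A) : Prop := sat A (scons y (e0 A)) p.

Lemma env_of1 A y : env_of A [y] = scons y (e0 A).
Proof. apply functional_extensionality; intros [|[|n]]; reflexivity. Qed.
Lemma env_of2 A x y : env_of A [x; y] = scons x (scons y (e0 A)).
Proof. apply functional_extensionality; intros [|[|[|n]]]; reflexivity. Qed.

Definition pieces_spec (phi : formula) (k : nat) (d : nat -> nat) (mu : nat -> R)
  (theta : nat -> formula) : Prop :=
    (forall i, i < k ->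
       d i <= N /\ (0 <= mu i)%R /\ (d i <> 0 -> (0 < mu i)%R) /\ fbound 1 (theta i)) /\
    (forall A, K A -> forall b : list (car A), length b = 1 ->
       (exists i, i < k /\ sat A (env_of A b) (theta i)) /\
       (forall i j, i < k -> j < k ->
          sat A (env_of A b) (theta i) -> sat A (env_of A b) (theta j) -> i = j)) /\
    (forall i, i < k -> forall eps : R, (0 < eps)%R ->
       exists M : nat, forall A (nA nphi : nat) (b : list (car A)),
         K A -> card_is A (fun _ => True) nA -> M <= nA ->
         length b = 1 -> sat A (env_of A b) (theta i) ->
         card_is A (fun x => sat A (env_of A (x :: b)) phi) nphi ->
         (Rabs (INR nphi - mu i * Rpower (INR nA) (INR (d i) / INR N))
           <= eps * Rpower (INR nA) (INR (d i) / INR N))%R).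

Lemma pieces_exist (p : formula) :
  exists t : nat * (nat -> nat) * (nat -> R) * (nat -> formula),
    let '(k, d, mu, theta) := t in fbound 2 p -> pieces_spec p k d mu theta.
Proof.
  destruct (classic (fbound 2 p)) as [H | H].
  - destruct (hAC 1 p H) as [k [d [mu [theta Hs]]]]. exists (k, d, mu, theta). intros _. exact Hs.
  - exists (0, fun _ => 0, fun _ => 0%R, fun _ => FFalse). tauto.
Qed.

Definition pieces (p : formula) : nat * (nat -> nat) * (nat -> R) * (nat -> formula) :=
  proj1_sig (IndefiniteDescription.constructive_indefinite_description _ (pieces_exist p)).
Definition npieces p := fst (fst (fst (pieces p))).
Definition pdim p := snd (fst (fst (pieces p))).
Definition pmu p := snd (fst (pieces p)).
Definition ptheta p := snd (pieces p).

Lemma pieces_correct p : fbound 2 p -> pieces_spec p (npieces p) (pdim p) (pmu p) (ptheta p).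
Proof.
  unfold npieces, pdim, pmu, ptheta, pieces.
  destruct IndefiniteDescription.constructive_indefinite_description as [[[[k d] mu] th] Ht].
  exact Ht.
Qed.

Lemma piece_bounds p i : fbound 2 p -> i < npieces p ->
  pdim p i <= N /\ (0 <= pmu p i)%R /\ (pdim p i <> 0 -> (0 < pmu p i)%R) /\
  fbound 1 (ptheta p i).
Proof. intros Hb Hi. apply (pieces_correct p Hb); auto. Qed.

Lemma piece_partition p A y : fbound 2 p -> K A ->
  (exists i, i < npieces p /\ sat1 A (ptheta p i) y) /\
  (forall i j, i < npieces p -> j < npieces p ->
     sat1 A (ptheta p i) y -> sat1 A (ptheta p j) y -> i = j).
Proof.
  intros Hb HA. destruct (pieces_correct p Hb) as [_ [H _]]. specialize (H A HA [y] eq_refl).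
  unfold sat1. rewrite env_of1 in H. exact H.
Qed.

Lemma piece_estimate p i : fbound 2 p -> i < npieces p -> forall eps : R, (0 < eps)%R ->
  exists M : nat, forall A (nA nphi : nat) (y : car A),
    K A -> card_is A (fun _ => True) nA -> M <= nA -> sat1 A (ptheta p i) y ->
    card_is A (fun x => sat A (scons x (scons y (e0 A))) p) nphi ->
    (Rabs (INR nphi - pmu p i * Rpower (INR nA) (INR (pdim p i) / INR N))
      <= eps * Rpower (INR nA) (INR (pdim p i) / INR N))%R.
Proof.
  intros Hb Hi eps Heps. destruct (pieces_correct p Hb) as [_ [_ H]].
  destruct (H i Hi eps Heps) as [M HM]. exists M. intros A nA nphi y HA HnA HM' Hy Hc.
  apply (HM A nA nphi [y]); auto.
  - unfold sat1 in Hy. rewrite env_of1. auto.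
  - eapply card_ext; [| exact Hc]. intros x. simpl. rewrite env_of2. tauto.
Qed.

(** ** Bounded height *)

Definition phi_le : formula := FLe (TVar 0) (TVar 1).

(* Lower end of the window [2/3 mu n^(d/N), 4/3 mu n^(d/N)] containing the
   downset sizes of the elements of piece i of x <= y. *)
Definition window (i nA : nat) : R :=
  (2 / 3 * (pmu phi_le i * Rpower (INR nA) (INR (pdim phi_le i) / INR N)))%R.

Lemma downset_size_window : exists Mx, forall i, i < npieces phi_le ->
  forall A (nA v : nat) (y : car A),
    K A -> card_is A (fun _ => True) nA -> Mx <= nA -> sat1 A (ptheta phi_le i) y ->
    card_is A (fun x => Ble A x y) v ->
    (pdim phi_le i = 0 -> (INR v <= pmu phi_le i + 1)%R) /\
    (pdim phi_le i <> 0 -> (window i nA <= INR v <= 2 * window i nA)%R).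
Proof.
  assert (Hb : fbound 2 phi_le) by (simpl; lia).
  apply common_threshold.
  2:{ intros i M M' HQ HMM' A nA nphi y HA HnA HM' Hy Hc. apply (HQ A nA nphi y); auto; lia. }
  intros i Hi. destruct (piece_bounds phi_le i Hb Hi) as [_ [Hmu0 [Hmu _]]]. unfold window.
  set (mu := pmu phi_le i) in *. set (d := pdim phi_le i) in *.
  destruct (Nat.eq_dec d 0) as [E | E].
  - destruct (piece_estimate phi_le i Hb Hi 1%R ltac:(lra)) as [M HM]. exists M.
    intros A nA v y HA HnA HM' Hy Hc. split; [| tauto]. intros _.
    specialize (HM A nA v y HA HnA HM' Hy Hc). fold d mu in HM.
    rewrite E in HM. simpl in HM. unfold Rdiv in HM. rewrite Rmult_0_l, Rpower_0 in HM.
    apply Rabs_le_between in HM. lra.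
  - specialize (Hmu E).
    destruct (piece_estimate phi_le i Hb Hi (mu / 3) ltac:(lra)) as [M HM].
    exists M. intros A nA v y HA HnA HM' Hy Hc. split; [tauto |]. intros _.
    specialize (HM A nA v y HA HnA HM' Hy Hc). fold d mu in HM.
    apply Rabs_le_between in HM.
    pose proof (Rpower_pos (INR nA) (INR d / INR N)). nra.
Qed.

Lemma height_bound : exists Hc, forall A, K A -> forall y n,
  card_is A (fun x => Ble A x y) n -> n <= Hc.
Proof.
  assert (Hb : fbound 2 phi_le) by (simpl; lia).
  set (k := npieces phi_le).
  destruct downset_size_window as [Mx HMx].
  destruct (common_threshold (fun i c => pdim phi_le i = 0 -> (pmu phi_le i + 1 <= INR c)%R) k)
    as [C HC].
  { intros i Hi. destruct (nat_above (pmu phi_le i + 1)) as [c Hc]. exists c. auto. }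
  { intros i c c' H Hcc' E. apply (Rle_trans _ _ _ (H E)), le_INR; auto. }
  exists (Nat.max ((C + 2) * 2 ^ k) Mx). intros A HA y n Hn.
  destruct (hK A HA) as [HF HT].
  destruct (card_exists A (fun _ => True) HF) as [nA HnA].
  destruct (le_lt_dec Mx nA) as [Hbig | Hsmall].
  2:{ pose proof (card_le_total A _ _ _ Hn HnA). lia. }
  (* every size v in (C, n] is the downset size of an ancestor of y, hence
     lies in the window of that ancestor's piece *)
  cut (n + 2 <= (C + 2) * 2 ^ k); [lia |].
  apply (window_cover C k (map (fun i => window i nA) (seq 0 k))).
  { rewrite length_map, length_seq; auto. }
  intros v Hv.
  assert (Hz := downset_piter A HT HF y n Hn (n - v) ltac:(lia)).
  replace (n - (n - v)) with v in Hz by lia.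
  destruct (piece_partition phi_le A (piter A (n - v) y) Hb HA) as [[i [Hi Hzi]] _].
  destruct (HMx i Hi A nA v _ HA HnA Hbig Hzi Hz) as [H0 H1].
  destruct (Nat.eq_dec (pdim phi_le i) 0) as [E | E].
  - specialize (HC i Hi E). specialize (H0 E).
    assert (INR v <= INR C)%R by lra. apply INR_le in H. lia.
  - exists (window i nA). split; [| apply H1; auto].
    apply in_map_iff. exists i. split; auto. apply in_seq. lia.
Qed.

(** ** Cells *)

Definition skip1 : nat -> nat := fun n => match n with 0 => 0 | S m => S (S m) end.

Definition child_formula (tau : formula) : formula :=
  FAnd (FAnd (FNot (FEq (TVar 0) TEps)) (FEq (TPred (TVar 0)) (TVar 1))) (frename skip1 tau).

Definition is_child (A : Lstr) (tau : formula) (y z : car A) : Prop :=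
  z <> Beps A /\ Bpred A z = y /\ sat1 A tau z.

Lemma sat_child_formula A tau y z :
  sat A (scons z (scons y (e0 A))) (child_formula tau) <-> is_child A tau y z.
Proof.
  unfold child_formula, is_child, sat1. simpl. rewrite sat_rename.
  replace (fun n => scons z (scons y (e0 A)) (skip1 n)) with (scons z (e0 A)); [tauto |].
  apply functional_extensionality; intros [|n]; reflexivity.
Qed.

Lemma fbound_child_formula tau : fbound 1 tau -> fbound 2 (child_formula tau).
Proof.
  intros H. simpl. split; [lia |]. apply (fbound_rename tau 1); auto.
  intros [|m] Hm; simpl; lia.
Qed.

Definition child_pieces (tau : formula) : list formula :=
  map (ptheta (child_formula tau)) (seq 0 (npieces (child_formula tau))).

(* Refinement of a list of cells: a new cell fixes, for every old cell tau,
   which piece of [child_formula tau] the element lies in. *)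
Definition refine (ts : list formula) : list formula :=
  fold_right (fun tau cs => flat_map (fun th => map (FAnd th) cs) (child_pieces tau)) [FTrue] ts.

Fixpoint cells (j : nat) : list formula :=
  match j with 0 => [FTrue] | S j => refine (cells j) end.

Lemma in_child_pieces tau th : In th (child_pieces tau) <->
  exists i, i < npieces (child_formula tau) /\ th = ptheta (child_formula tau) i.
Proof.
  unfold child_pieces. rewrite in_map_iff. split.
  - intros [i [E Hi]]. apply in_seq in Hi. exists i; split; [lia | auto].
  - intros [i [Hi E]]. exists i; split; auto. apply in_seq; lia.
Qed.

Lemma in_refine tau ts s : In s (refine (tau :: ts)) <->
  exists th c, In th (child_pieces tau) /\ In c (refine ts) /\ s = FAnd th c.
Proof.
  simpl. fold (refine ts). rewrite in_flat_map. split.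
  - intros [th [Hth Hs]]. apply in_map_iff in Hs. destruct Hs as [c [E Hc]]. exists th, c; auto.
  - intros [th [c [Hth [Hc E]]]]. exists th; split; auto. apply in_map_iff. exists c; auto.
Qed.

Lemma refine_fbound ts : (forall tau, In tau ts -> fbound 1 tau) ->
  forall s, In s (refine ts) -> fbound 1 s.
Proof.
  induction ts as [|tau ts IH]; intros Hts s Hs.
  - destruct Hs as [<- | []]. simpl. lia.
  - apply in_refine in Hs. destruct Hs as [th [c [Hth [Hc ->]]]]. split.
    + apply in_child_pieces in Hth. destruct Hth as [i [Hi ->]].
      apply (piece_bounds (child_formula tau) i); auto.
      apply fbound_child_formula, Hts; left; auto.
    + apply IH; auto. intros; apply Hts; right; auto.
Qed.

Lemma cells_fbound j : forall s, In s (cells j) -> fbound 1 s.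
Proof.
  induction j; intros s Hs.
  - destruct Hs as [<- | []]. simpl. lia.
  - apply (refine_fbound (cells j)); auto.
Qed.

Lemma refine_determines_piece ts : forall s tau, In s (refine ts) -> In tau ts ->
  exists i, i < npieces (child_formula tau) /\
    forall A y, sat1 A s y -> sat1 A (ptheta (child_formula tau) i) y.
Proof.
  induction ts as [|t0 ts IH]; intros s tau Hs Ht; [destruct Ht |].
  apply in_refine in Hs. destruct Hs as [th [c [Hth [Hc ->]]]].
  destruct Ht as [<- | Ht].
  - apply in_child_pieces in Hth. destruct Hth as [i [Hi ->]]. exists i; split; auto.
    intros A y [H _]; auto.
  - destruct (IH c tau Hc Ht) as [i [Hi H]]. exists i; split; auto. intros A y [_ H2]; auto.
Qed.

Lemma refine_partition A ts : K A -> (forall tau, In tau ts -> fbound 1 tau) -> forall y,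
  (exists s, In s (refine ts) /\ sat1 A s y) /\
  (forall s s', In s (refine ts) -> In s' (refine ts) -> sat1 A s y -> sat1 A s' y -> s = s').
Proof.
  intros HA. induction ts as [|tau ts IH]; intros Hts y.
  - split.
    + exists FTrue. split; [left; auto | unfold sat1; simpl; auto].
    + intros s s' [<- | []] [<- | []]; auto.
  - assert (Hb : fbound 2 (child_formula tau)) by (apply fbound_child_formula, Hts; left; auto).
    destruct (IH (fun t H => Hts t (or_intror H)) y) as [[c [Hc Hcy]] Hu].
    destruct (piece_partition (child_formula tau) A y Hb HA) as [[i [Hi Hiy]] Hpu].
    split.
    + exists (FAnd (ptheta (child_formula tau) i) c). split.
      * apply in_refine. exists (ptheta (child_formula tau) i), c.
        split; [apply in_child_pieces; eauto | auto].
      * unfold sat1 in *; simpl; auto.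
    + intros s s' Hs Hs'. apply in_refine in Hs, Hs'.
      destruct Hs as [th [c1 [Hth [Hc1 ->]]]]. destruct Hs' as [th' [c1' [Hth' [Hc1' ->]]]].
      intros [Hsy1 Hsy2] [Hs'y1 Hs'y2].
      apply in_child_pieces in Hth, Hth'.
      destruct Hth as [i1 [Hi1 ->]]. destruct Hth' as [i2 [Hi2 ->]].
      rewrite (Hpu i1 i2 Hi1 Hi2 Hsy1 Hs'y1). f_equal. apply Hu; auto.
Qed.

Lemma cells_partition A j y : K A ->
  (exists s, In s (cells j) /\ sat1 A s y) /\
  (forall s s', In s (cells j) -> In s' (cells j) -> sat1 A s y -> sat1 A s' y -> s = s').
Proof.
  intros HA. destruct j as [|j].
  - split; [exists FTrue; split; [left; auto | unfold sat1; simpl; auto] |].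
    intros s s' [<- | []] [<- | []]; auto.
  - apply refine_partition; auto. apply cells_fbound.
Qed.

Lemma child_estimate tau i : fbound 1 tau -> i < npieces (child_formula tau) ->
  forall eps : R, (0 < eps)%R -> exists M : nat, forall A (nA n : nat) (y : car A),
    K A -> card_is A (fun _ => True) nA -> M <= nA ->
    sat1 A (ptheta (child_formula tau) i) y -> card_is A (is_child A tau y) n ->
    (Rabs (INR n - pmu (child_formula tau) i *
                   Rpower (INR nA) (INR (pdim (child_formula tau) i) / INR N))
      <= eps * Rpower (INR nA) (INR (pdim (child_formula tau) i) / INR N))%R.
Proof.
  intros Hb Hi eps Heps.
  destruct (piece_estimate _ i (fbound_child_formula tau Hb) Hi eps Heps) as [M HM].
  exists M. intros A nA n y HA HnA HMn Hy Hc. apply (HM A nA n y); auto.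
  eapply card_ext; [| exact Hc]. intros x. rewrite sat_child_formula. tauto.
Qed.

(* Eventually, in piece i, the number of tau-children is the fixed number n
   (Some n) or exceeds every bound (None). *)
Definition child_count_spec (tau : formula) (i : nat) (o : option nat) : Prop :=
  match o with
  | Some n => exists M, forall A nA y, K A -> card_is A (fun _ => True) nA -> M <= nA ->
      sat1 A (ptheta (child_formula tau) i) y -> card_is A (is_child A tau y) n
  | None => forall m, exists M, forall A nA y, K A -> card_is A (fun _ => True) nA -> M <= nA ->
      sat1 A (ptheta (child_formula tau) i) y -> ~ covered A (is_child A tau y) m
  end.

(* In a piece of dimension 0 the counts are within 1/3 of mu, hence constant. *)
Lemma child_count_dim0 tau i : fbound 1 tau -> i < npieces (child_formula tau) ->
  pdim (child_formula tau) i = 0 -> exists n, child_count_spec tau i (Some n).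
Proof.
  intros Hb Hi E.
  destruct (child_estimate tau i Hb Hi (1/3)%R ltac:(lra)) as [M HM].
  assert (HM' : forall A nA n y, K A -> card_is A (fun _ => True) nA -> M <= nA ->
      sat1 A (ptheta (child_formula tau) i) y -> card_is A (is_child A tau y) n ->
      (- (1/3) <= INR n - pmu (child_formula tau) i <= 1/3)%R).
  { intros A nA n y HA HnA HMn Hy Hc. specialize (HM A nA n y HA HnA HMn Hy Hc).
    rewrite E in HM. unfold Rdiv in HM. rewrite Rmult_0_l, Rpower_0, !Rmult_1_r in HM.
    apply Rabs_le_between; exact HM. }
  destruct (classic (exists A nA y, K A /\ card_is A (fun _ => True) nA /\ M <= nA /\
               sat1 A (ptheta (child_formula tau) i) y)) as [Hex | Hnex].
  - destruct Hex as [A [nA [y [HA [HnA [HMn Hy]]]]]].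
    destruct (card_exists A (is_child A tau y) (proj1 (hK A HA))) as [n0 Hn0].
    exists n0, M. intros A' nA' y' HA' HnA' HMn' Hy'.
    destruct (card_exists A' (is_child A' tau y') (proj1 (hK A' HA'))) as [n1 Hn1].
    replace n0 with n1; auto. apply INR_close.
    pose proof (HM' A nA n0 y HA HnA HMn Hy Hn0). pose proof (HM' A' nA' n1 y' HA' HnA' HMn' Hy' Hn1).
    apply Rabs_def1; lra.
  - exists 0, M. intros A nA y HA HnA HMn Hy. exfalso. apply Hnex. eauto 10.
Qed.

(* In a piece of positive dimension the counts grow like mu n^(d/N) -> oo. *)
Lemma child_count_unbounded tau i : fbound 1 tau -> i < npieces (child_formula tau) ->
  pdim (child_formula tau) i <> 0 -> child_count_spec tau i None.
Proof.
  intros Hb Hi E m.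
  destruct (piece_bounds _ i (fbound_child_formula tau Hb) Hi) as [_ [_ [Hmu _]]].
  specialize (Hmu E). set (mu := pmu (child_formula tau) i) in *.
  set (a := (INR (pdim (child_formula tau) i) / INR N)%R).
  destruct (child_estimate tau i Hb Hi (mu / 2) ltac:(lra)) as [M1 HM1].
  assert (Ha : (0 < a)%R) by (apply Rdiv_lt_0_compat; apply lt_0_INR; lia).
  destruct (Rpower_unbounded a Ha (2 * (INR m + 1) / mu)%R) as [M2 HM2].
  exists (Nat.max M1 M2). intros A nA y HA HnA HMn Hy Hcov.
  destruct (card_exists A (is_child A tau y) (proj1 (hK A HA))) as [n Hn].
  assert (Hle := proj1 (card_covered _ _ _ _ Hn) Hcov).
  specialize (HM1 A nA n y HA HnA ltac:(lia) Hy Hn). fold mu a in HM1.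
  apply Rabs_le_between in HM1.
  specialize (HM2 nA ltac:(lia)).
  assert (HmP : (2 * (INR m + 1) <= mu * Rpower (INR nA) a)%R).
  { apply (Rmult_le_compat_l mu) in HM2; [| lra].
    replace (mu * (2 * (INR m + 1) / mu))%R with (2 * (INR m + 1))%R in HM2 by (field; lra).
    exact HM2. }
  assert (INR n <= INR m)%R by (apply le_INR; auto). lra.
Qed.

Lemma child_count_exists (tau : formula) (i : nat) :
  exists o, fbound 1 tau -> i < npieces (child_formula tau) -> child_count_spec tau i o.
Proof.
  destruct (classic (fbound 1 tau /\ i < npieces (child_formula tau))) as [[H1 H2] | H];
    [| exists None; tauto].
  destruct (Nat.eq_dec (pdim (child_formula tau) i) 0) as [E | E].
  - destruct (child_count_dim0 tau i H1 H2 E) as [n Hn]. exists (Some n); auto.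
  - exists None. intros _ _. apply child_count_unbounded; auto.
Qed.

Definition child_count (tau : formula) (i : nat) : option nat :=
  proj1_sig (IndefiniteDescription.constructive_indefinite_description _ (child_count_exists tau i)).

Lemma child_count_correct tau i : fbound 1 tau -> i < npieces (child_formula tau) ->
  child_count_spec tau i (child_count tau i).
Proof. unfold child_count. destruct IndefiniteDescription.constructive_indefinite_description. auto. Qed.

Definition Hd : nat :=
  proj1_sig (IndefiniteDescription.constructive_indefinite_description _ height_bound).

Lemma Hd_correct A : K A -> forall y n, card_is A (fun x => Ble A x y) n -> n <= Hd.
Proof.
  intros HA y n Hn. unfold Hd.
  destruct IndefiniteDescription.constructive_indefinite_description as [h Hh]. simpl. eauto.
Qed.

Fixpoint ancestor_within (n : nat) : formula :=
  match n with
  | 0 => FEq (TVar 1) (TVar 0)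
  | S n => FOr (ancestor_within n) (FEq (TVar 1) (predn (S n) (TVar 0)))
  end.

Lemma sat_ancestor_within A e x y n : sat A (scons y (scons x e)) (ancestor_within n) <->
  exists j, j <= n /\ x = piter A j y.
Proof.
  induction n; simpl.
  - split; [intros H; exists 0; auto | intros [j [Hj H]]; replace j with 0 in H by lia; auto].
  - rewrite IHn, teval_predn. simpl. split.
    + intros [[j [Hj H]] | H]; [exists j | exists (S n)]; split; auto.
    + intros [j [Hj H]]. destruct (Nat.eq_dec j (S n)) as [-> | ]; [right; auto |].
      left; exists j; split; auto; lia.
Qed.

Lemma fbound_ancestor_within n : fbound 2 (ancestor_within n).
Proof. induction n; simpl; [lia |]. repeat split; auto; try lia. apply tbound_predn; simpl; lia. Qed.

Definition ax_height : formula := FAll (FEq (predn Hd (TVar 0)) TEps).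
Definition ax_below : formula :=
  FAll (FAll (FAnd (FImp (FLe (TVar 1) (TVar 0)) (ancestor_within Hd))
                   (FImp (ancestor_within Hd) (FLe (TVar 1) (TVar 0))))).
Definition ax_meet : formula := FAll (FAll (FAnd (FLe (TMeet (TVar 1) (TVar 0)) (TVar 1))
  (FAnd (FLe (TMeet (TVar 1) (TVar 0)) (TVar 0))
   (FAll (FImp (FAnd (FLe (TVar 0) (TVar 2)) (FLe (TVar 0) (TVar 1)))
               (FLe (TVar 0) (TMeet (TVar 2) (TVar 1)))))))).
Definition ax_antisym : formula :=
  FAll (FAll (FImp (FAnd (FLe (TVar 1) (TVar 0)) (FLe (TVar 0) (TVar 1))) (FEq (TVar 1) (TVar 0)))).
Definition ax_pred_root : formula := FEq (TPred TEps) TEps.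

Inductive Ax : formula -> Prop :=
| Ax_height : Ax ax_height
| Ax_below : Ax ax_below
| Ax_meet : Ax ax_meet
| Ax_antisym : Ax ax_antisym
| Ax_pred_root : Ax ax_pred_root
| Ax_cover j : Ax (FAll (big_or (cells j)))
| Ax_disjoint j s s' : In s (cells j) -> In s' (cells j) -> s <> s' ->
    Ax (FAll (FNot (FAnd s s')))
| Ax_count j tau i n : In tau (cells j) -> i < npieces (child_formula tau) ->
    child_count tau i = Some n ->
    Ax (FAll (FImp (ptheta (child_formula tau) i) (exactly n (child_formula tau))))
| Ax_infinite j tau i m : In tau (cells j) -> i < npieces (child_formula tau) ->
    child_count tau i = None ->
    Ax (FAll (FImp (ptheta (child_formula tau) i) (FNot (at_most m (child_formula tau))))).

Lemma Ax_sentence s : Ax s -> sentence s.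
Proof.
  unfold sentence. intros H; destruct H as [ | | | | | j | j s s' Hs Hs' _
    | j tau i n Htau Hi _ | j tau i m Htau Hi _]; simpl.
  - split; [apply tbound_predn; simpl; lia | auto].
  - pose proof (fbound_ancestor_within Hd). repeat split; auto; lia.
  - repeat split; lia.
  - repeat split; lia.
  - auto.
  - apply fbound_big_or, cells_fbound.
  - split; apply (cells_fbound j); auto.
  - assert (Hb := fbound_child_formula tau (cells_fbound j tau Htau)). split.
    + apply (piece_bounds (child_formula tau) i); auto.
    + apply fbound_exactly; auto.
  - assert (Hb := fbound_child_formula tau (cells_fbound j tau Htau)). split.
    + apply (piece_bounds (child_formula tau) i); auto.
    + apply fbound_at_most; auto.
Qed.

Lemma sat_at_most_child A tau y m :
  sat A (scons y (e0 A)) (at_most m (child_formula tau)) <-> covered A (is_child A tau y) m.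
Proof.
  rewrite sat_at_most. unfold covered.
  split; intros [l [Hl H]]; exists l; split; auto; intros z Hz; apply H, sat_child_formula; auto.
Qed.

Lemma sat_exactly_child A tau y n :
  sat A (scons y (e0 A)) (exactly n (child_formula tau)) <->
  covered A (is_child A tau y) n /\ (n = 0 \/ ~ covered A (is_child A tau y) (n - 1)).
Proof.
  destruct n; simpl exactly.
  - rewrite sat_at_most_child. tauto.
  - simpl sat. rewrite !sat_at_most_child. replace (S n - 1) with n by lia. intuition lia.
Qed.

Lemma ax_height_in_K A : K A -> sat A (e0 A) ax_height.
Proof.
  intros HA. destruct (hK A HA) as [HF HT]. simpl. intros y. rewrite teval_predn. simpl.
  destruct (card_exists A (fun x => Ble A x y) HF) as [n Hn].
  pose proof (Hd_correct A HA y n Hn). pose proof (downset_pos A HT y n Hn).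
  replace Hd with ((Hd - (n - 1)) + (n - 1)) by lia.
  rewrite piter_add, (piter_top A HT HF y n Hn). apply piter_eps; auto.
Qed.

Lemma ax_below_in_K A : K A -> sat A (e0 A) ax_below.
Proof.
  intros HA. destruct (hK A HA) as [HF HT]. simpl. intros x y. rewrite sat_ancestor_within. split.
  - intros Hxy. destruct (card_exists A (fun x => Ble A x y) HF) as [n Hn].
    destruct (below_ancestors A HT HF n y Hn x Hxy) as [j [Hj E]]. exists j; split; auto.
    pose proof (Hd_correct A HA y n Hn). lia.
  - intros [j [_ ->]]. apply piter_le; auto.
Qed.

Lemma Ax_eventually s : Ax s -> exists M, forall A nA, K A ->
  card_is A (fun _ => True) nA -> M <= nA -> sat A (e0 A) s.
Proof.
  intros H. destruct H as [ | | | | | j | j s s' Hs Hs' Hne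
    | j tau i n Htau Hi Ec | j tau i m Htau Hi Ec].
  1-7: exists 0; intros A nA HA _ _; destruct (hK A HA) as [HF HT]; simpl.
  - apply ax_height_in_K; auto.
  - apply ax_below_in_K; auto.
  - intros x y. destruct (t_meet A HT x y) as [H1 [H2 H3]]. repeat split; auto. intros c []; auto.
  - intros x y [H1 H2]. apply t_anti; auto.
  - apply t_pred_eps; auto.
  - intros y. apply sat_big_or. destruct (cells_partition A j y HA) as [[s [Hs Hsy]] _]. eauto.
  - intros y [Hy1 Hy2]. apply Hne. apply (proj2 (cells_partition A j y HA)); auto.
  - pose proof (child_count_correct tau i (cells_fbound j tau Htau) Hi) as Hs. rewrite Ec in Hs.
    destruct Hs as [M HM]. exists M. intros A nA HA HnA HMn. simpl. intros y Hy.
    specialize (HM A nA y HA HnA HMn Hy). apply sat_exactly_child.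
    rewrite !(card_covered _ _ _ _ HM). lia.
  - pose proof (child_count_correct tau i (cells_fbound j tau Htau) Hi) as Hs. rewrite Ec in Hs.
    destruct (Hs m) as [M HM]. exists M. intros A nA HA HnA HMn. simpl. intros y Hy.
    rewrite sat_at_most_child. apply (HM A nA y); auto.
Qed.

Definition AxModel (M : Lstr) : Prop := forall s, Ax s -> sat M (e0 M) s.

Section AxModelFacts.
Variable M : Lstr.
Hypothesis hM : AxModel M.

Lemma model_height y : piter M Hd y = Beps M.
Proof. pose proof (hM _ Ax_height y) as H. simpl in H. rewrite teval_predn in H. exact H. Qed.

Lemma model_below x y : Ble M x y <-> exists j, j <= Hd /\ x = piter M j y.
Proof. pose proof (hM _ Ax_below x y) as H. simpl in H. rewrite sat_ancestor_within in H. tauto. Qed.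

Lemma model_meet x y : Ble M (Bmeet M x y) x /\ Ble M (Bmeet M x y) y /\
  forall c, Ble M c x -> Ble M c y -> Ble M c (Bmeet M x y).
Proof. pose proof (hM _ Ax_meet x y) as H. simpl in H. intuition. Qed.

Lemma model_antisym x y : Ble M x y -> Ble M y x -> x = y.
Proof. pose proof (hM _ Ax_antisym x y) as H. simpl in H. auto. Qed.

Lemma model_pred_root : Bpred M (Beps M) = Beps M.
Proof. exact (hM _ Ax_pred_root). Qed.

Lemma model_cover j y : exists s, In s (cells j) /\ sat1 M s y.
Proof. pose proof (hM _ (Ax_cover j) y) as H. apply sat_big_or in H. exact H. Qed.

Lemma model_disjoint j s s' y : In s (cells j) -> In s' (cells j) ->
  sat1 M s y -> sat1 M s' y -> s = s'.
Proof.
  intros H1 H2 H3 H4. apply NNPP. intros Hne. apply (hM _ (Ax_disjoint j s s' H1 H2 Hne) y).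
  split; auto.
Qed.

Lemma model_count j tau i n y : In tau (cells j) -> i < npieces (child_formula tau) ->
  child_count tau i = Some n -> sat1 M (ptheta (child_formula tau) i) y ->
  covered M (is_child M tau y) n /\ (n = 0 \/ ~ covered M (is_child M tau y) (n - 1)).
Proof.
  intros H1 H2 H3 H4. apply sat_exactly_child. apply (hM _ (Ax_count j tau i n H1 H2 H3) y H4).
Qed.

Lemma model_infinite j tau i m y : In tau (cells j) -> i < npieces (child_formula tau) ->
  child_count tau i = None -> sat1 M (ptheta (child_formula tau) i) y ->
  ~ covered M (is_child M tau y) m.
Proof.
  intros H1 H2 H3 H4. rewrite <- sat_at_most_child. apply (hM _ (Ax_infinite j tau i m H1 H2 H3) y H4).
Qed.

End AxModelFacts.

(** ** Partial isomorphisms between models of Ax *)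

Definition depth (M : Lstr) (x : car M) (l : nat) : Prop :=
  piter M l x = Beps M /\ forall j, j < l -> piter M j x <> Beps M.

(* Elements at depth l are compared by their cells of level S Hd - l: the
   level decreases with depth, so that the cell of a parent determines the
   child counts with respect to the cells of its children. *)
Definition level_cells (l : nat) : list formula := cells (S Hd - l).

Definition partial_iso (M M' : Lstr) (f : list (car M * car M')) : Prop :=
  In (Beps M, Beps M') f /\
  (forall a a', In (a, a') f -> In (Bpred M a, Bpred M' a') f) /\
  (forall a a' b b', In (a, a') f -> In (b, b') f -> (a = b <-> a' = b')) /\
  (forall a a' l, In (a, a') f -> depth M a l ->
     forall s, In s (level_cells l) -> (sat1 M s a <-> sat1 M' s a')).

Lemma depth_unique M x l l' : depth M x l -> depth M x l' -> l = l'.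
Proof.
  intros [H1 H2] [H1' H2']. destruct (lt_eq_lt_dec l l') as [[H | H] | H]; auto; exfalso.
  - exact (H2' l H H1).
  - exact (H2 l' H H1').
Qed.

Lemma depth_root M l : depth M (Beps M) l -> l = 0.
Proof. intros D. apply (depth_unique M (Beps M) l 0); auto. split; simpl; auto. intros; lia. Qed.

Lemma depth_S M x l : depth M x (S l) -> x <> Beps M /\ depth M (Bpred M x) l.
Proof.
  intros [H1 H2]. split; [apply (H2 0); lia |]. split.
  - rewrite <- piter_S_r. auto.
  - intros j Hj. rewrite <- piter_S_r. apply H2. lia.
Qed.

Lemma depth_child M x l : x <> Beps M -> depth M (Bpred M x) l -> depth M x (S l).
Proof.
  intros Hx [H1 H2]. split.
  - rewrite piter_S_r. auto.
  - intros [|j] Hj; simpl; auto. change (piter M (S j) x <> Beps M).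
    rewrite piter_S_r. apply H2. lia.
Qed.

Lemma depth_exists M : AxModel M -> forall x, exists l, l <= Hd /\ depth M x l.
Proof.
  intros hM x. destruct (nat_least (fun l => piter M l x = Beps M)) as [l [Hl Hmin]].
  - exists Hd. apply model_height; auto.
  - exists l. split; [apply Hmin, model_height; auto |]. split; auto.
    intros j Hj E. apply Hmin in E. lia.
Qed.

Lemma partial_iso_piter M M' f : partial_iso M M' f ->
  forall a a' j, In (a, a') f -> In (piter M j a, piter M' j a') f.
Proof. intros [_ [G2 _]] a a' j H. induction j; simpl; auto. Qed.

Lemma partial_iso_depth M M' f a a' l : partial_iso M M' f -> In (a, a') f ->
  (depth M a l <-> depth M' a' l).
Proof.
  intros HG H. pose proof (partial_iso_piter M M' f HG a a') as Hit.
  destruct HG as [G1 [_ [G3 _]]].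
  unfold depth. split; intros [D1 D2]; split; try intros j Hj E; try apply (D2 j Hj);
    apply (G3 _ _ _ _ (Hit _ H) G1); auto.
Qed.

Definition flip_pairs {X Y : Type} (f : list (X * Y)) : list (Y * X) :=
  map (fun p => (snd p, fst p)) f.

Lemma in_flip_pairs {X Y : Type} (f : list (X * Y)) a b : In (a, b) (flip_pairs f) <-> In (b, a) f.
Proof.
  unfold flip_pairs. rewrite in_map_iff. split.
  - intros [[u v] [E H]]. simpl in E. inversion E; subst; auto.
  - intros H. exists (b, a); auto.
Qed.

Lemma partial_iso_flip M M' f : partial_iso M M' f -> partial_iso M' M (flip_pairs f).
Proof.
  intros HG. pose proof HG as [G1 [G2 [G3 G4]]].
  split; [| split; [| split]]; intros; rewrite ?in_flip_pairs in *; auto.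
  - rewrite (G3 _ _ _ _ H H0). tauto.
  - symmetry. apply (G4 a' a l); auto. apply (partial_iso_depth M M' f a' a l HG H); auto.
Qed.

Section BackAndForth.
Variables M M' : Lstr.
Hypothesis hM : AxModel M.
Hypothesis hM' : AxModel M'.

(* In models of Ax, <= is definable from pred, hence preserved. *)
Lemma partial_iso_le f x x' y y' : partial_iso M M' f -> In (x, x') f -> In (y, y') f ->
  (Ble M x y <-> Ble M' x' y').
Proof.
  intros HG Hx Hy. rewrite (model_below M hM), (model_below M' hM').
  pose proof (partial_iso_piter M M' f HG y y') as Hit. destruct HG as [_ [_ [G3 _]]].
  split; intros [j [Hj E]]; exists j; split; auto; apply (G3 _ _ _ _ Hx (Hit j Hy)); auto.
Qed.

(* The meet of a and b is an ancestor of a, hence already in the domain. *)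
Lemma partial_iso_meet f a a' b b' : partial_iso M M' f -> In (a, a') f -> In (b, b') f ->
  In (Bmeet M a b, Bmeet M' a' b') f.
Proof.
  intros HG Ha Hb.
  destruct (model_meet M hM a b) as [Ma [Mb Mc]]. destruct (model_meet M' hM' a' b') as [Ma' [Mb' Mc']].
  destruct (proj1 (model_below M hM _ _) Ma) as [j [Hj Ej]].
  set (m' := piter M' j a').
  assert (Hm : In (Bmeet M a b, m') f) by (rewrite Ej; apply (partial_iso_piter M M'); auto).
  enough (E : m' = Bmeet M' a' b') by (rewrite <- E; auto).
  apply (model_antisym M' hM').
  - apply Mc'; [apply (partial_iso_le f _ _ _ _ HG Hm Ha) | apply (partial_iso_le f _ _ _ _ HG Hm Hb)];
      auto.
  - destruct (proj1 (model_below M' hM' _ _) Ma') as [j' [Hj' Ej']].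
    assert (Hn : In (piter M j' a, Bmeet M' a' b') f)
      by (rewrite Ej'; apply (partial_iso_piter M M'); auto).
    apply (partial_iso_le f _ _ _ _ HG Hn Hm). apply Mc.
    + apply (model_below M hM). exists j'; split; auto.
    + apply (partial_iso_le f _ _ _ _ HG Hn Hb). auto.
Qed.

Lemma partial_iso_term f e e' : partial_iso M M' f -> (forall n, In (e n, e' n) f) ->
  forall t, In (teval M e t, teval M' e' t) f.
Proof.
  intros HG He t. induction t; simpl; auto.
  - apply HG.
  - apply partial_iso_meet; auto.
  - apply HG; auto.
Qed.

Definition partner (f : list (car M * car M')) (c : car M) : car M' :=
  match excluded_middle_informative (exists c', In (c, c') f) with
  | left H => proj1_sig (IndefiniteDescription.constructive_indefinite_description _ H)
  | right _ => Beps M'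
  end.

Lemma partner_spec f c : (exists c', In (c, c') f) -> In (c, partner f c) f.
Proof.
  intros H. unfold partner. destruct excluded_middle_informative; [| tauto].
  destruct IndefiniteDescription.constructive_indefinite_description; auto.
Qed.

Lemma matched_children f p p' x l tau :
  partial_iso M M' f -> In (p, p') f -> depth M p l -> In tau (cells (Hd - l)) ->
  ~ (exists x', In (x, x') f) ->
  forall z', is_child M' tau p' z' -> In z' (map snd f) ->
  exists z, In (z, z') f /\ is_child M tau p z /\ z <> x.
Proof.
  intros HG Hp Hpd Htau Hnot z' [Hz'e [Hz'p Hz't]] Hin.
  pose proof HG as [G1 [G2 [G3 G4]]].
  apply in_map_iff in Hin. destruct Hin as [[z z0'] [E Hin]]. simpl in E. subst z0'.
  exists z. split; auto. split; [| intros ->; apply Hnot; eauto].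
  split; [| split].
  - intros ->. apply Hz'e. apply (G3 _ _ _ _ Hin G1). auto.
  - apply (G3 _ _ _ _ (G2 _ _ Hin) Hp). rewrite Hz'p. auto.
  - assert (Hdz' : depth M' z' (S l)).
    { apply depth_child; auto. rewrite Hz'p. apply (partial_iso_depth M M' f p p' l HG Hp). auto. }
    apply (partial_iso_depth M M' f z z' (S l) HG Hin) in Hdz'.
    unfold sat1 in *. rewrite (G4 z z' (S l) Hin Hdz' tau); auto.
Qed.

(* Key counting step: p and its partner p' lie in the same piece for
   [child_formula tau], so have the same number of tau-children (or both
   infinitely many); hence a tau-child of p outside the domain of f can be
   matched by a tau-child of p' outside its range. *)
Lemma fresh_child f p p' x l tau :
  partial_iso M M' f -> In (p, p') f -> depth M p l -> S l <= Hd ->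
  In tau (cells (Hd - l)) -> is_child M tau p x -> ~ (exists x', In (x, x') f) ->
  exists x', is_child M' tau p' x' /\ ~ In x' (map snd f).
Proof.
  intros HG Hp Hpd Hl Htau Hx Hnot.
  pose proof HG as [G1 [G2 [G3 G4]]].
  assert (Ecells : level_cells l = refine (cells (Hd - l))).
  { unfold level_cells. replace (S Hd - l) with (S (Hd - l)) by lia. reflexivity. }
  destruct (model_cover M hM (S (Hd - l)) p) as [sg [Hsg Hsp]].
  destruct (refine_determines_piece _ sg tau Hsg Htau) as [i [Hi Hsub]].
  assert (Hsp' : sat1 M' sg p') by (rewrite <- (G4 p p' l Hp Hpd sg); rewrite ?Ecells; auto).
  assert (Hpi := Hsub M p Hsp). assert (Hpi' := Hsub M' p' Hsp').
  apply NNPP. intros Hno.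
  assert (Hall : forall z', is_child M' tau p' z' -> In z' (map snd f)).
  { intros z' Hz'. apply NNPP. intros Hn. apply Hno. eauto. }
  pose proof (matched_children f p p' x l tau HG Hp Hpd Htau Hnot) as Hpre.
  destruct (child_count tau i) as [n |] eqn:Ecnt.
  - destruct (model_count M hM _ tau i n p Htau Hi Ecnt Hpi) as [[C [HC1 HC2]] _].
    destruct (model_count M' hM' _ tau i n p' Htau Hi Ecnt Hpi') as [_ [-> | Hn1]].
    + destruct C; [apply (HC2 x Hx) | discriminate].
    + (* the partners of the tau-children of p other than x cover those of p' *)
      apply Hn1, (covered_pad M' _ (n - 1)); auto.
      exists (map (partner f) (remove edec x C)). split.
      * rewrite length_map. pose proof (remove_length_lt edec C x (HC2 x Hx)). lia.
      * intros z' Hz'. destruct (Hpre z' Hz' (Hall z' Hz')) as [z [Hzz [Hchz Hzx]]].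
        apply in_map_iff. exists z. split.
        -- apply (G3 _ _ _ _ (partner_spec f z ltac:(eauto)) Hzz). auto.
        -- apply in_in_remove; auto.
  - apply (model_infinite M' hM' _ tau i (length f) p' Htau Hi Ecnt Hpi').
    exists (map snd f). rewrite length_map. split; auto.
Qed.

Lemma extend_partial_iso f x x' l tau :
  partial_iso M M' f -> In (Bpred M x, Bpred M' x') f -> depth M x (S l) ->
  In tau (level_cells (S l)) -> sat1 M tau x -> sat1 M' tau x' ->
  ~ (exists y', In (x, y') f) -> ~ In x' (map snd f) ->
  partial_iso M M' ((x, x') :: f).
Proof.
  intros [G1 [G2 [G3 G4]]] Hp Hxd Htau Hx Hx' Hnot Hx'n.
  split; [| split; [| split]].
  - right; auto.
  - intros a a' [E | H]; [injection E as <- <- |]; right; auto.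
  - intros a a' b b' [Ea | Ha] [Eb | Hb];
      [injection Ea as <- <-; injection Eb as <- <-; tauto
      | injection Ea as <- <- | injection Eb as <- <- | auto];
      split; intros E; exfalso; subst;
      solve [apply Hnot; eauto | apply Hx'n, in_map_iff; eexists; split; [| eauto]; reflexivity].
  - intros a a' l' [E | Ha] Hd' s Hs; [| apply (G4 a a' l'); auto].
    injection E as <- <-. rewrite (depth_unique M x l' (S l) Hd' Hxd) in Hs.
    split; intros Hsat.
    + rewrite (model_disjoint M hM _ s tau x Hs Htau Hsat Hx). auto.
    + rewrite (model_disjoint M' hM' _ s tau x' Hs Htau Hsat Hx'). auto.
Qed.

Lemma forth_depth l : forall f x, partial_iso M M' f -> depth M x l ->
  exists g x', partial_iso M M' g /\ incl f g /\ In (x, x') g.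
Proof.
  induction l; intros f x HG Hx.
  - exists f, (Beps M'). split; [| split]; [auto | intros z; auto |].
    destruct Hx as [Hx _]. simpl in Hx. subst. apply HG.
  - destruct (depth_S M x l Hx) as [Hxe Hpx].
    destruct (IHl f (Bpred M x) HG Hpx) as [g [p' [HG1 [Hinc Hp]]]].
    destruct (classic (exists x', In (x, x') g)) as [[x' Hx'] | Hnot]; [exists g, x'; auto |].
    assert (Hl : S l <= Hd).
    { destruct (depth_exists M hM x) as [l' [Hl' Hd']]. rewrite (depth_unique M x (S l) l' Hx Hd').
      auto. }
    destruct (model_cover M hM (Hd - l) x) as [tau [Htau Htx]].
    destruct (fresh_child g (Bpred M x) p' x l tau HG1 Hp Hpx Hl Htau (conj Hxe (conj eq_refl Htx)) Hnot)
      as [x' [[_ [Hx'p Hx't]] Hx'n]].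
    exists ((x, x') :: g), x'. split; [| split; [intros z Hz; right; auto | left; auto]].
    apply (extend_partial_iso g x x' l tau); auto. rewrite Hx'p. exact Hp.
Qed.

Lemma forth f x : partial_iso M M' f -> exists g x', partial_iso M M' g /\ incl f g /\ In (x, x') g.
Proof. intros HG. destruct (depth_exists M hM x) as [l [_ Hl]]. apply (forth_depth l); auto. Qed.

End BackAndForth.

(* Back: the symmetric statement, by flipping the partial map. *)
Lemma back M M' (hM : AxModel M) (hM' : AxModel M') f x' : partial_iso M M' f ->
  exists g x, partial_iso M M' g /\ incl f g /\ In (x, x') g.
Proof.
  intros HG.
  destruct (forth M' M hM' hM (flip_pairs f) x' (partial_iso_flip _ _ _ HG))
    as [g [x [HG2 [Hinc Hin]]]].
  exists (flip_pairs g), x. split; [apply partial_iso_flip; auto | split].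
  - intros [a a'] H. apply in_flip_pairs, Hinc, in_flip_pairs. auto.
  - apply in_flip_pairs. auto.
Qed.

Theorem partial_iso_elementary M M' (hM : AxModel M) (hM' : AxModel M') p :
  forall f e e', partial_iso M M' f -> (forall n, In (e n, e' n) f) -> (sat M e p <-> sat M' e' p).
Proof.
  induction p; intros f e e' HG He; simpl;
    rewrite ?(IHp f e e' HG He), ?(IHp1 f e e' HG He), ?(IHp2 f e e' HG He); try tauto.
  - pose proof HG as [_ [_ [G3 _]]].
    apply G3; apply (partial_iso_term M M' hM hM' f e e' HG He).
  - apply (partial_iso_le M M' hM hM' f); auto; apply (partial_iso_term M M' hM hM' f e e' HG He).
  - assert (Hext : forall g x x', partial_iso M M' g -> incl f g -> In (x, x') g ->
                     (sat M (scons x e) p <-> sat M' (scons x' e') p)).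
    { intros g x x' HG2 Hinc Hin. apply (IHp g); auto. intros [|n]; simpl; auto. }
    split.
    + intros [x Hx]. destruct (forth M M' hM hM' f x HG) as [g [x' [HG2 [Hinc Hin]]]].
      exists x'. rewrite <- (Hext g x x'); auto.
    + intros [x' Hx']. destruct (back M M' hM hM' f x' HG) as [g [x [HG2 [Hinc Hin]]]].
      exists x. rewrite (Hext g x x'); auto.
  - assert (Hext : forall g x x', partial_iso M M' g -> incl f g -> In (x, x') g ->
                     (sat M (scons x e) p <-> sat M' (scons x' e') p)).
    { intros g x x' HG2 Hinc Hin. apply (IHp g); auto. intros [|n]; simpl; auto. }
    split.
    + intros H x'. destruct (back M M' hM hM' f x' HG) as [g [x [HG2 [Hinc Hin]]]].
      rewrite <- (Hext g x x'); auto.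
    + intros H x. destruct (forth M M' hM hM' f x HG) as [g [x' [HG2 [Hinc Hin]]]].
      rewrite (Hext g x x'); auto.
Qed.

Lemma sat_at_most_FTrue A k : sat A (e0 A) (at_most k FTrue) <-> covered A (fun _ => True) k.
Proof.
  rewrite sat_at_most. unfold covered.
  split; intros [l [Hl H]]; exists l; split; auto; intros z _; apply H; simpl; auto.
Qed.

Section InfiniteUltraproduct.
Variables (I : Type) (U : (I -> Prop) -> Prop) (F : I -> Lstr).
Hypothesis hU : ultrafilter U.
Hypothesis hF : forall i, K (F i).
Hypothesis hinf : infinite_str (ultraproduct U F).

Lemma ultraproduct_factors_large k : U (fun i => ~ covered (F i) (fun _ => True) k).
Proof.
  apply NNPP. intros H. apply (proj2 (U_not I U hU _)) in H. apply hinf.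
  assert (H2 : U (fun i => sat (F i) (fun n => Beps (F i)) (at_most k FTrue))).
  { apply (U_mono I U hU _ _ H). intros i Hi. apply NNPP in Hi. apply sat_at_most_FTrue. auto. }
  apply (los I U hU F (at_most k FTrue) (fun _ i => Beps (F i))) in H2.
  apply sat_at_most_FTrue in H2. destruct H2 as [l [_ Hl]]. exists l. auto.
Qed.

Lemma ultraproduct_AxModel : AxModel (ultraproduct U F).
Proof.
  intros s Hs. destruct (Ax_eventually s Hs) as [Ms HMs].
  apply (los I U hU F s (fun _ i => Beps (F i))).
  apply (U_mono I U hU _ _ (ultraproduct_factors_large Ms)). intros i Hi.
  destruct (card_exists (F i) (fun _ => True) (proj1 (hK (F i) (hF i)))) as [nA HnA].
  apply (HMs (F i) nA); auto.
  destruct (le_lt_dec nA Ms) as [Hle | Hlt]; [| lia].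
  exfalso. apply Hi. apply (card_covered _ _ _ _ HnA). auto.
Qed.

End InfiniteUltraproduct.

Definition at_root (s : formula) : formula := FAll (FImp (FEq (TVar 0) TEps) s).

Lemma sat_at_root M s : sat M (e0 M) (at_root s) <-> sat1 M s (Beps M).
Proof.
  unfold at_root, sat1. simpl. split.
  - intros H. apply H. auto.
  - intros H y ->. exact H.
Qed.

Lemma at_root_sentence s : fbound 1 s -> sentence (at_root s).
Proof. intros H. unfold sentence, at_root. simpl. repeat split; auto. Qed.

Lemma root_partial_iso M M' s : AxModel M -> AxModel M' -> In s (level_cells 0) ->
  sat1 M s (Beps M) -> sat1 M' s (Beps M') -> partial_iso M M' [(Beps M, Beps M')].
Proof.
  intros hM hM' Hs H1 H2. split; [left; auto | split; [| split]].
  - intros a a' [E | []]. injection E as <- <-.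
    rewrite (model_pred_root M hM), (model_pred_root M' hM'). left; auto.
  - intros a a' b b' [E | []] [E' | []]. injection E as <- <-; injection E' as <- <-. tauto.
  - intros a a' l [E | []] D s' Hs'. injection E as <- <-.
    apply depth_root in D. subst l. split; intros H.
    + rewrite (model_disjoint M hM _ s' s (Beps M) Hs' Hs H H1). auto.
    + rewrite (model_disjoint M' hM' _ s' s (Beps M') Hs' Hs H H2). auto.
Qed.

Definition root_theory (s0 : formula) : formula -> Prop :=
  fun s => sentence s /\ forall M', AxModel M' -> sat1 M' s0 (Beps M') -> sat M' (e0 M') s.

Lemma ultraproduct_theory_listed (I : Type) (U : (I -> Prop) -> Prop) (F : I -> Lstr) :
  ultrafilter U -> (forall i, K (F i)) -> infinite_str (ultraproduct U F) ->
  exists2 T, In T (map root_theory (level_cells 0)) & forall s, T s <-> Th (ultraproduct U F) s.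
Proof.
  intros hU hF hinf. set (UP := ultraproduct U F).
  assert (hG : AxModel UP) by (apply ultraproduct_AxModel; auto).
  destruct (model_cover UP hG (S Hd) (Beps UP)) as [s0 [Hs0 Hr]].
  assert (Hs0' : In s0 (level_cells 0)) by (unfold level_cells; rewrite Nat.sub_0_r; auto).
  exists (root_theory s0); [apply in_map; auto |].
  intros s. unfold root_theory, Th. split; intros [Hs H]; split; auto.
  intros M' hM' Hr'.
  apply (proj1 (partial_iso_elementary UP M' hG hM' s [(Beps UP, Beps M')] (e0 UP) (e0 M')
           (root_partial_iso UP M' s0 hG hM' Hs0' Hr Hr') ltac:(intros; left; auto))).
  exact H.
Qed.

Section CountableIsomorphism.
Variables M1 M2 : Lstr.
Hypothesis h1 : AxModel M1.
Hypothesis h2 : AxModel M2.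
Variable f1 : nat -> car M1.
Variable f2 : nat -> car M2.
Hypothesis f1_onto : forall x, exists n, f1 n = x.
Hypothesis f2_onto : forall x, exists n, f2 n = x.
Variable g0 : list (car M1 * car M2).
Hypothesis hg0 : partial_iso M1 M2 g0.

Lemma round_exists (g : list (car M1 * car M2)) (x : car M1) (x' : car M2) :
  exists g', partial_iso M1 M2 g -> partial_iso M1 M2 g' /\ incl g g' /\
    (exists y', In (x, y') g') /\ (exists y, In (y, x') g').
Proof.
  destruct (classic (partial_iso M1 M2 g)) as [H | H]; [| exists g; tauto].
  destruct (forth M1 M2 h1 h2 g x H) as [g1 [y' [H1 [Hinc1 Hy']]]].
  destruct (back M1 M2 h1 h2 g1 x' H1) as [g2 [y [H2 [Hinc2 Hy]]]].
  exists g2. intros _. split; [| split; [| split]]; eauto.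
  intros z Hz; auto.
Qed.

Definition round g x x' :=
  proj1_sig (IndefiniteDescription.constructive_indefinite_description _ (round_exists g x x')).

Lemma round_correct g x x' : partial_iso M1 M2 g ->
  partial_iso M1 M2 (round g x x') /\ incl g (round g x x') /\
  (exists y', In (x, y') (round g x x')) /\ (exists y, In (y, x') (round g x x')).
Proof. unfold round. destruct IndefiniteDescription.constructive_indefinite_description. auto. Qed.

Fixpoint chain (n : nat) : list (car M1 * car M2) :=
  match n with 0 => g0 | S n => round (chain n) (f1 n) (f2 n) end.

Lemma chain_iso n : partial_iso M1 M2 (chain n).
Proof. induction n; simpl; auto. apply round_correct; auto. Qed.

Lemma chain_mono n m : n <= m -> incl (chain n) (chain m).
Proof.
  induction 1; [intros z; auto |]. intros z Hz. apply (round_correct _ _ _ (chain_iso m)). auto.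
Qed.

Lemma chain_union_iso n m : partial_iso M1 M2 (chain (Nat.max n m)) /\
  incl (chain n) (chain (Nat.max n m)) /\ incl (chain m) (chain (Nat.max n m)).
Proof. split; [apply chain_iso | split; apply chain_mono; lia]. Qed.

Lemma chain_functional n m x y' z' : In (x, y') (chain n) -> In (x, z') (chain m) -> y' = z'.
Proof.
  intros Hy Hz. destruct (chain_union_iso n m) as [[_ [_ [G3 _]]] [Hn Hm]].
  apply (G3 x y' x z'); auto.
Qed.

Lemma chain_total x : exists x', exists n, In (x, x') (chain n).
Proof.
  destruct (f1_onto x) as [n <-].
  destruct (round_correct _ (f1 n) (f2 n) (chain_iso n)) as [_ [_ [[x' Hx'] _]]].
  exists x', (S n). exact Hx'.
Qed.

Definition limit_map (x : car M1) : car M2 :=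
  proj1_sig (IndefiniteDescription.constructive_indefinite_description _ (chain_total x)).

Lemma limit_map_in_chain x : exists n, In (x, limit_map x) (chain n).
Proof. unfold limit_map. destruct IndefiniteDescription.constructive_indefinite_description. auto. Qed.

Lemma limit_map_eq n x x' : In (x, x') (chain n) -> limit_map x = x'.
Proof. intros H. destruct (limit_map_in_chain x) as [m Hm]. eapply chain_functional; eauto. Qed.

Lemma limit_map_iso : isomorphic M1 M2.
Proof.
  exists limit_map. split; [| split; [| split; [| split; [| split]]]].
  - intros x y E. destruct (limit_map_in_chain x) as [n Hn]. destruct (limit_map_in_chain y) as [m Hm].
    destruct (chain_union_iso n m) as [[_ [_ [G3 _]]] [Hn' Hm']].
    apply (G3 _ _ _ _ (Hn' _ Hn) (Hm' _ Hm)). auto.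
  - intros z. destruct (f2_onto z) as [n <-].
    destruct (round_correct _ (f1 n) (f2 n) (chain_iso n)) as [_ [_ [_ [x Hx]]]].
    exists x. apply (limit_map_eq (S n)). exact Hx.
  - intros x y. destruct (limit_map_in_chain x) as [n Hn]. destruct (limit_map_in_chain y) as [m Hm].
    destruct (chain_union_iso n m) as [HG [Hn' Hm']].
    apply (partial_iso_le M1 M2 h1 h2 _ _ _ _ _ HG (Hn' _ Hn) (Hm' _ Hm)).
  - apply (limit_map_eq 0). apply hg0.
  - intros x y. destruct (limit_map_in_chain x) as [n Hn]. destruct (limit_map_in_chain y) as [m Hm].
    destruct (chain_union_iso n m) as [HG [Hn' Hm']].
    apply (limit_map_eq (Nat.max n m)), (partial_iso_meet M1 M2 h1 h2); auto.
  - intros x. destruct (limit_map_in_chain x) as [n Hn].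
    apply (limit_map_eq n), (chain_iso n); auto.
Qed.

End CountableIsomorphism.

Lemma ultraproduct_theory_categorical (I : Type) (U : (I -> Prop) -> Prop) (F : I -> Lstr) :
  ultrafilter U -> (forall i, K (F i)) -> infinite_str (ultraproduct U F) ->
  aleph0_categorical (Th (ultraproduct U F)).
Proof.
  intros hU hF hinf. set (UP := ultraproduct U F).
  assert (hG : AxModel UP) by (apply ultraproduct_AxModel; auto).
  destruct (model_cover UP hG (S Hd) (Beps UP)) as [s0 [Hs0 Hr]].
  assert (Hs0' : In s0 (level_cells 0)) by (unfold level_cells; rewrite Nat.sub_0_r; auto).
  intros M1 M2 [f1 [_ f1_onto]] [f2 [_ f2_onto]] Hm1 Hm2.
  assert (Hmodel : forall M', models M' (Th UP) -> AxModel M' /\ sat1 M' s0 (Beps M')).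
  { intros M' Hm'. split.
    - intros s Hs. apply Hm'. split; [apply Ax_sentence | apply hG]; auto.
    - apply (proj1 (sat_at_root M' s0)), Hm'.
      split; [apply at_root_sentence, (cells_fbound (S Hd)); auto |].
      apply (proj2 (sat_at_root UP s0)); auto. }
  destruct (Hmodel M1 Hm1) as [G1 R1]. destruct (Hmodel M2 Hm2) as [G2 R2].
  apply (limit_map_iso M1 M2 G1 G2 f1 f2 f1_onto f2_onto [(Beps M1, Beps M2)]).
  apply (root_partial_iso M1 M2 s0); auto.
Qed.

End AsymptoticTrees.

Theorem mainTheorem15 (N : nat) (K : Lstr -> Prop) :
  (0 < N)%nat ->
  (forall A, K A -> finite_str A /\ is_tree A) ->
  (forall n : nat, exists A nA, K A /\ card_is A (fun _ => True) nA /\ (n <= nA)%nat) ->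
  asymptotic_class N K ->
  (* (1) the set of theories of infinite ultraproducts of members of K is finite *)
  (exists L : list (formula -> Prop),
     forall (I : Type) (U : (I -> Prop) -> Prop) (F : I -> Lstr),
       ultrafilter U -> (forall i, K (F i)) -> infinite_str (ultraproduct U F) ->
       exists2 T, In T L & forall s, T s <-> Th (ultraproduct U F) s) /\
  (* (2) each of them is aleph_0-categorical *)
  (forall (I : Type) (U : (I -> Prop) -> Prop) (F : I -> Lstr),
     ultrafilter U -> (forall i, K (F i)) -> infinite_str (ultraproduct U F) ->
     aleph0_categorical (Th (ultraproduct U F))).
Proof.
  intros hN hK _ hAC. split.
  - exists (map (root_theory N K hN hK hAC) (level_cells N K hN hK hAC 0)).
    exact (ultraproduct_theory_listed N K hN hK hAC).
  - exact (ultraproduct_theory_categorical N K hN hK hAC).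
Qed.
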